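(* Let $n\geqslant0$ be an integer and $f\colon[a,b]\to\mathbb{R}$ be such that $f,f',\dots,f^{(n)}$ are continuous on $[a,b]$ and $LD_{n+1}f$ exists almost everywhere on $[a,b]$. If $LD_{n+1}f$ is Laplace integrable on $[a,b]$ with \[f^{(n)}(x)-f^{(n)}(a)=\int_a^xLD_{n+1}f\quad\text{for all }x\in[a,b],\] then for all $x\in[a,b]$, \[f(x)=\sum_{k=0}^n\frac{f^{(k)}(a)}{k!}(x-a)^k+R_{n,a}(x),\qquad R_{n,a}(x)=\frac{1}{n!}\int_a^xLD_{n+1}f(t)(x-t)^n\,dt,\] where the last integral is a Laplace integral, and moreover \[\sup_{x\in[a,b]}|R_{n,a}(x)|\leqslant\frac{(b-a)^n}{n!}\|LD_{n+1}f\|_{[a,b]}.\]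
   Context: For $f$ with $f,\dots,f^{(n)}$ continuous near $x$, $LD_{n+1}f(x)$ denotes the $(n+1)$-th order Laplace derivative: the common value, when both limits exist and are equal, of $\lim_{s\to\infty}s^{n+2}\int_0^\delta e^{-st}\big[f(x+t)-\sum_{i=0}^n\frac{t^i}{i!}f^{(i)}(x)\big]dt$ and $\lim_{s\to\infty}(-1)^{n+1}s^{n+2}\int_0^\delta e^{-st}\big[f(x-t)-\sum_{i=0}^n\frac{(-t)^i}{i!}f^{(i)}(x)\big]dt$ for some $\delta>0$ (one-sided at endpoints); for $n=0$ this is $LD_1f$. Laplace integral on $[a,b]$: with lower/upper Laplace derivates $\underline{LD}_1F(x)$, $\overline{LD}_1F(x)$ being the minimum of the $\liminf$'s, resp. maximum of the $\limsup$'s, as $s\to\infty$ of $s^2\int_0^\delta e^{-st}[F(x+t)-F(x)]dt$ and $(-s^2)\int_0^\delta e^{-st}[F(x-t)-F(x)]dt$, a major function of $h$ is a continuous $U$ with $\underline{LD}_1U\geqslant h$, $\underline{LD}_1U>-\infty$ everywhere, a minor function a continuous $V$ with $\overline{LD}_1V\leqslant h$, $\overline{LD}_1V<\infty$ everywhere, and $h$ is Laplace integrable if $\sup_V(V(b)-V(a))=\inf_U(U(b)-U(a))$ is finite, the value being $\int_a^bh$ (values on null sets are irrelevant). Alexiewicz norm: $\|h\|_{[a,b]}=\sup_{x\in[a,b]}|\int_a^xh|$. *)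

From Stdlib Require Import Reals Lra Factorial.
From Coquelicot Require Import Coquelicot.
Open Scope R_scope.

Definition cont_on (g : R -> R) (a b : R) : Prop :=
  forall x, a <= x <= b -> forall eps, 0 < eps -> exists del, 0 < del /\
    forall y, a <= y <= b -> Rabs (y - x) < del -> Rabs (g y - g x) < eps.

Definition deriv_on (g g' : R -> R) (a b : R) : Prop :=
  forall x, a <= x <= b -> forall eps, 0 < eps -> exists del, 0 < del /\
    forall y, a <= y <= b -> 0 < Rabs (y - x) < del ->
      Rabs ((g y - g x) / (y - x) - g' x) < eps.

Definition null_set (N : R -> Prop) : Prop :=
  forall eps, 0 < eps -> exists c d : nat -> R,
    (forall k, c k <= d k) /\
    (forall x, N x -> exists k, c k <= x <= d k) /\
    (forall m, sum_f_R0 (fun k => d k - c k) m <= eps).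

(* D i = f^(i), i = 0..n *)
Definition taylor_poly (D : nat -> R -> R) (n : nat) (x t : R) : R :=
  sum_f_R0 (fun i => t ^ i / INR (fact i) * D i x) n.

Definition LD_right (D : nat -> R -> R) (n : nat) (x del s : R) : R :=
  s ^ (n + 2) * RInt (fun t => exp (- (s * t)) *
      (D 0%nat (x + t) - taylor_poly D n x t)) 0 del.

Definition LD_left (D : nat -> R -> R) (n : nat) (x del s : R) : R :=
  (-1) ^ (n + 1) * s ^ (n + 2) * RInt (fun t => exp (- (s * t)) *
      (D 0%nat (x - t) - taylor_poly D n x (- t))) 0 del.

(* LD_{n+1} f (x) = l, for f = D 0 on [a,b] with derivatives D i, one-sided
   at the endpoints *)
Definition is_LD (D : nat -> R -> R) (n : nat) (a b x l : R) : Prop :=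
  exists del, 0 < del /\
    (x < b -> x + del <= b /\ is_lim (LD_right D n x del) p_infty (Finite l)) /\
    (a < x -> a <= x - del /\ is_lim (LD_left D n x del) p_infty (Finite l)).

Definition LimInf_pinfty (g : R -> R) : Rbar :=
  Rbar_lub (fun y => exists M, y = Glb_Rbar (fun z => exists s, M <= s /\ z = g s)).
Definition LimSup_pinfty (g : R -> R) : Rbar :=
  Rbar_glb (fun y => exists M, y = Lub_Rbar (fun z => exists s, M <= s /\ z = g s)).

Definition LD1_right (F : R -> R) (x del s : R) : R :=
  s ^ 2 * RInt (fun t => exp (- (s * t)) * (F (x + t) - F x)) 0 del.
Definition LD1_left (F : R -> R) (x del s : R) : R :=
  - (s ^ 2) * RInt (fun t => exp (- (s * t)) * (F (x - t) - F x)) 0 del.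

(* lower derivate >= h x and > -oo (minimum over the available sides) *)
Definition lower_LD_ge (U : R -> R) (a b x c : R) : Prop :=
  (x < b -> exists del, 0 < del /\ x + del <= b /\
     Rbar_le (Finite c) (LimInf_pinfty (LD1_right U x del)) /\
     Rbar_lt m_infty (LimInf_pinfty (LD1_right U x del))) /\
  (a < x -> exists del, 0 < del /\ a <= x - del /\
     Rbar_le (Finite c) (LimInf_pinfty (LD1_left U x del)) /\
     Rbar_lt m_infty (LimInf_pinfty (LD1_left U x del))).

(* upper derivate <= h x and < +oo (maximum over the available sides) *)
Definition upper_LD_le (V : R -> R) (a b x c : R) : Prop :=
  (x < b -> exists del, 0 < del /\ x + del <= b /\
     Rbar_le (LimSup_pinfty (LD1_right V x del)) (Finite c) /\
     Rbar_lt (LimSup_pinfty (LD1_right V x del)) p_infty) /\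
  (a < x -> exists del, 0 < del /\ a <= x - del /\
     Rbar_le (LimSup_pinfty (LD1_left V x del)) (Finite c) /\
     Rbar_lt (LimSup_pinfty (LD1_left V x del)) p_infty).

Definition major_fun (U h : R -> R) (a b : R) : Prop :=
  cont_on U a b /\ forall x, a <= x <= b -> lower_LD_ge U a b x (h x).
Definition minor_fun (V h : R -> R) (a b : R) : Prop :=
  cont_on V a b /\ forall x, a <= x <= b -> upper_LD_le V a b x (h x).

Definition is_LaplaceInt (h : R -> R) (a b I : R) : Prop :=
  is_glb_Rbar (fun y => exists U, major_fun U h a b /\ y = U b - U a) (Finite I) /\
  is_lub_Rbar (fun y => exists V, minor_fun V h a b /\ y = V b - V a) (Finite I).

Definition Alex_norm (h : R -> R) (a b : R) : Rbar :=
  Lub_Rbar (fun y => exists x I, a <= x <= b /\ is_LaplaceInt h a x I /\ y = Rabs I).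

(* The heart of the proof is an integration by parts for
   major functions: if U is major for h and rho >= 0 is C^1, then
   rho U - int U rho' is major for rho h, because the correction term is
   o(|q - p|) and the Laplace quotient of such a term vanishes as s -> oo.
   Applied with rho(t) = (x - t)^(m+1) and with its reciprocal, and using
   that F(t) = f^(n)(t) - f^(n)(a) is the Laplace integral of L over [a,t],
   this shows that L(t)(x - t)^(m+1) is Laplace integrable over [a,x] with
   the Riemann integral  int_a^x (m+1)(x - t)^m F(t) dt  as integral.
   Taylor's formula with integral remainder of order m then gives the
   expansion, and bounding |F| by the Alexiewicz norm gives the estimate. *)

From Stdlib Require Import Reals Factorial.
From Coquelicot Require Import Coquelicot.
From Stdlib Require Import Lra Lia Classical FunctionalExtensionality.
Open Scope R_scope.

Lemma continuous_Rmult (f g : R -> R) x :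
  continuous f x -> continuous g x -> continuous (fun y => f y * g y) x.
Proof. exact (continuous_mult f g x). Qed.

Lemma continuous_Rplus (f g : R -> R) x :
  continuous f x -> continuous g x -> continuous (fun y => f y + g y) x.
Proof. exact (continuous_plus f g x). Qed.

Lemma continuous_Rminus (f g : R -> R) x :
  continuous f x -> continuous g x -> continuous (fun y => f y - g y) x.
Proof. exact (continuous_minus f g x). Qed.

Lemma continuous_Ropp (f : R -> R) x :
  continuous f x -> continuous (fun y => - f y) x.
Proof. exact (continuous_opp f x). Qed.

Lemma continuous_Rexp (f : R -> R) x :
  continuous f x -> continuous (fun y => exp (f y)) x.
Proof. exact (continuous_exp_comp f x). Qed.

Lemma continuous_pow_sub (x : R) (m : nat) t : continuous (fun t => (x - t) ^ m) t.
Proof. apply (ex_derive_continuous (K := R_AbsRing) (V := R_NormedModule)). auto_derive. auto. Qed.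

Lemma continuous_shift (f : R -> R) (x sg u : R) :
  continuous f (x + sg * u) -> continuous (fun u => f (x + sg * u)) u.
Proof.
  intros H. apply (continuous_comp (fun u => x + sg * u) f); auto.
  apply continuous_Rplus; [apply continuous_const |].
  apply continuous_Rmult; [apply continuous_const | apply continuous_id].
Qed.

#[local] Hint Resolve continuous_Rmult continuous_Rplus continuous_Rminus continuous_Ropp
  continuous_Rexp continuous_pow_sub continuous_const continuous_id : rcont.

Lemma continuous_eps (U : R -> R) t : continuous U t <->
  forall eps, 0 < eps -> exists eta, 0 < eta /\
    forall y, Rabs (y - t) < eta -> Rabs (U y - U t) < eps.
Proof.
  change (continuous U t) with (filterlim U (locally t) (locally (U t))).
  rewrite <- continuity_pt_filterlim. split.
  - intros H eps He. destruct (H eps He) as [eta [Heta Hy]]. exists eta; split; auto.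
    intros y Hyt. destruct (Req_dec y t) as [-> | Hne].
    + rewrite Rminus_diag, Rabs_R0; lra.
    + apply Hy. repeat split; auto.
  - intros H eps He. destruct (H eps He) as [eta [Heta Hy]]. exists eta; split; auto.
    intros y [_ Hyt]. apply Hy; auto.
Qed.

Lemma continuous_bounded (w : R -> R) p q : p <= q ->
  (forall u, p <= u <= q -> continuous w u) ->
  exists B, forall u, p <= u <= q -> Rabs (w u) <= B.
Proof.
  intros Hpq Hc.
  destruct (continuity_ab_maj (fun u => Rabs (w u)) p q Hpq) as [M [HM _]].
  - intros c Hc'. apply continuity_pt_filterlim, continuous_Rabs_comp; auto.
  - exists (Rabs (w M)); auto.
Qed.

Lemma RInt_Rext (f g : R -> R) a b :
  (forall x, Rmin a b < x < Rmax a b -> f x = g x) -> RInt f a b = RInt g a b.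
Proof. apply (RInt_ext (V := R_CompleteNormedModule)). Qed.

Lemma ex_RInt_of_continuous (f : R -> R) a b : a <= b ->
  (forall u, a <= u <= b -> continuous f u) -> ex_RInt f a b.
Proof.
  intros Hab H. apply (ex_RInt_continuous (V := R_CompleteNormedModule)).
  intros z Hz. rewrite Rmin_left, Rmax_right in Hz; auto.
Qed.

Definition eventually_ge (g : R -> R) (c : R) : Prop :=
  forall eps, 0 < eps -> exists M, forall s, M <= s -> c - eps <= g s.

Definition vanishes_at_infty (g : R -> R) : Prop :=
  forall eps, 0 < eps -> exists M, forall s, M <= s -> Rabs (g s) <= eps.

Lemma LimInf_pinfty_ge g c :
  Rbar_le (Finite c) (LimInf_pinfty g) -> eventually_ge g c.
Proof.
  unfold LimInf_pinfty, Rbar_lub. destruct (Rbar_ex_lub _) as [l [Hub Hl]]. simpl.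
  intros Hc eps He. apply NNPP; intros Hn.
  enough (Rbar_le l (Finite (c - eps))) by (destruct l; simpl in *; lra).
  apply Hl. intros y [M ->].
  assert (Hs : exists s, M <= s /\ g s < c - eps).
  { apply NNPP; intros H2. apply Hn. exists M. intros s Hs.
    apply Rnot_lt_le. intros H3. apply H2. exists s; auto. }
  destruct Hs as [s [Hs Hgs]].
  apply Rbar_le_trans with (Finite (g s)); [| simpl; lra].
  apply (Glb_Rbar_correct (fun z => exists s, M <= s /\ z = g s)). exists s; auto.
Qed.

Lemma eventually_ge_LimInf_pinfty g c : eventually_ge g c ->
  Rbar_le (Finite c) (LimInf_pinfty g) /\ Rbar_lt m_infty (LimInf_pinfty g).
Proof.
  unfold LimInf_pinfty, Rbar_lub. destruct (Rbar_ex_lub _) as [l [Hub Hl]]. simpl.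
  intros H.
  assert (Hk : forall eps, 0 < eps -> Rbar_le (Finite (c - eps)) l).
  { intros eps He. destruct (H eps He) as [M HM].
    apply Rbar_le_trans with (Glb_Rbar (fun z => exists s, M <= s /\ z = g s)).
    - apply (Glb_Rbar_correct (fun z => exists s, M <= s /\ z = g s)).
      intros z [s [Hs ->]]. simpl. auto.
    - apply Hub. exists M; auto. }
  destruct l as [l | |]; simpl.
  - split; auto. apply Rnot_lt_le; intros Hlt.
    specialize (Hk ((c - l) / 2) ltac:(lra)). simpl in Hk. lra.
  - auto.
  - destruct (Hk 1 Rlt_0_1).
Qed.

Lemma LimSup_pinfty_le g c :
  Rbar_le (LimSup_pinfty g) (Finite c) -> eventually_ge (fun s => - g s) (- c).
Proof.
  unfold LimSup_pinfty, Rbar_glb. destruct (Rbar_ex_glb _) as [l [Hub Hl]]. simpl.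
  intros Hc eps He. apply NNPP; intros Hn.
  enough (Rbar_le (Finite (c + eps)) l) by (destruct l; simpl in *; lra).
  apply Hl. intros y [M ->].
  assert (Hs : exists s, M <= s /\ c + eps < g s).
  { apply NNPP; intros H2. apply Hn. exists M. intros s Hs.
    apply Rnot_lt_le. intros H3. apply H2. exists s; split; auto; lra. }
  destruct Hs as [s [Hs Hgs]].
  apply Rbar_le_trans with (Finite (g s)); [simpl; lra |].
  apply (Lub_Rbar_correct (fun z => exists s, M <= s /\ z = g s)). exists s; auto.
Qed.

Lemma eventually_ge_LimSup_pinfty g c : eventually_ge (fun s => - g s) (- c) ->
  Rbar_le (LimSup_pinfty g) (Finite c) /\ Rbar_lt (LimSup_pinfty g) p_infty.
Proof.
  unfold LimSup_pinfty, Rbar_glb. destruct (Rbar_ex_glb _) as [l [Hlb Hl]]. simpl.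
  intros H.
  assert (Hk : forall eps, 0 < eps -> Rbar_le l (Finite (c + eps))).
  { intros eps He. destruct (H eps He) as [M HM].
    apply Rbar_le_trans with (Lub_Rbar (fun z => exists s, M <= s /\ z = g s)).
    - apply Hlb. exists M; auto.
    - apply (Lub_Rbar_correct (fun z => exists s, M <= s /\ z = g s)).
      intros z [s [Hs ->]]. simpl. specialize (HM s Hs). lra. }
  destruct l as [l | |]; simpl.
  - split; auto. apply Rnot_lt_le; intros Hlt.
    specialize (Hk ((l - c) / 2) ltac:(lra)). simpl in Hk. lra.
  - destruct (Hk 1 Rlt_0_1).
  - auto.
Qed.

Lemma eventually_ge_ext (X Y : R -> R) c :
  (forall s, X s = Y s) -> eventually_ge X c -> eventually_ge Y c.
Proof.
  intros E H eps He. destruct (H eps He) as [M HM]. exists M. intros s Hs. rewrite <- E. auto.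
Qed.

Lemma eventually_ge_affine (X Y : R -> R) c r : 0 <= r ->
  eventually_ge X c -> vanishes_at_infty Y ->
  eventually_ge (fun s => r * X s + Y s) (r * c).
Proof.
  intros Hr HX HY eps He.
  destruct (HX (eps / (2 * (r + 1))) ltac:(apply Rdiv_lt_0_compat; lra)) as [M1 H1].
  destruct (HY (eps / 2) ltac:(lra)) as [M2 H2].
  exists (Rmax M1 M2). intros s Hs.
  specialize (H1 s (Rle_trans _ _ _ (Rmax_l M1 M2) Hs)).
  specialize (H2 s (Rle_trans _ _ _ (Rmax_r M1 M2) Hs)).
  apply Rabs_le_between in H2.
  assert (r * (c - eps / (2 * (r + 1))) <= r * X s) by (apply Rmult_le_compat_l; auto).
  assert (r * (eps / (2 * (r + 1))) <= eps / 2).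
  { replace (r * (eps / (2 * (r + 1)))) with (eps / 2 * (r / (r + 1))) by (field; lra).
    rewrite <- (Rmult_1_r (eps / 2)) at 2.
    apply Rmult_le_compat_l; [lra | apply (Rdiv_le_1 r (r + 1)); lra]. }
  rewrite Rmult_minus_distr_l in *. lra.
Qed.

Lemma vanishes_at_infty_opp Y : vanishes_at_infty Y -> vanishes_at_infty (fun s => - Y s).
Proof.
  intros H eps He. destruct (H eps He) as [M HM]. exists M. intros. rewrite Rabs_Ropp. auto.
Qed.

Lemma vanishes_at_infty_of_le_div (Y : R -> R) K : 0 <= K ->
  (forall s, 1 <= s -> Rabs (Y s) <= K / s) -> vanishes_at_infty Y.
Proof.
  intros HK H eps He. exists (Rmax 1 (K / eps)). intros s Hs.
  assert (Hs1 := Rle_trans _ _ _ (Rmax_l 1 (K / eps)) Hs).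
  assert (Hs2 := Rle_trans _ _ _ (Rmax_r 1 (K / eps)) Hs).
  apply Rle_trans with (K / s); auto.
  apply Rmult_le_reg_r with s; [lra |].
  unfold Rdiv. rewrite Rmult_assoc, Rinv_l, Rmult_1_r by lra.
  apply Rmult_le_reg_r with (/ eps); [apply Rinv_0_lt_compat; lra |].
  replace (eps * s * / eps) with s by (field; lra). auto.
Qed.

Definition laplace_s2 (w : R -> R) (del s : R) : R :=
  s ^ 2 * RInt (fun u => exp (- (s * u)) * w u) 0 del.

Lemma LD1_right_laplace U x del s :
  LD1_right U x del s = laplace_s2 (fun u => U (x + u) - U x) del s.
Proof. reflexivity. Qed.

Lemma LD1_left_laplace U x del s :
  LD1_left U x del s = - laplace_s2 (fun u => U (x - u) - U x) del s.
Proof. unfold LD1_left, laplace_s2. ring. Qed.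

Lemma exp_ge_cube y : 0 <= y -> y ^ 3 / 27 <= exp y.
Proof.
  intros Hy. replace (exp y) with (exp (y / 3) * exp (y / 3) * exp (y / 3))
    by (rewrite <- !exp_plus; f_equal; field).
  assert (H1 : y / 3 <= exp (y / 3)).
  { destruct (Req_dec y 0) as [-> | Hn].
    - unfold Rdiv; rewrite Rmult_0_l, exp_0; lra.
    - assert (H := exp_ineq1 (y / 3) ltac:(intro; apply Hn; lra)). lra. }
  assert (y / 3 * (y / 3) <= exp (y / 3) * exp (y / 3)) by (apply Rmult_le_compat; lra).
  replace (y ^ 3 / 27) with (y / 3 * (y / 3) * (y / 3)) by field.
  apply Rmult_le_compat; nra.
Qed.

(* The polynomial decay rate s^2 e^(-s eta) = O(1/s) is all the tail estimates need. *)
Lemma sq_mul_exp_neg_le eta s : 0 < eta -> 0 < s ->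
  s ^ 2 * exp (- (s * eta)) <= 27 / (eta ^ 3 * s).
Proof.
  intros He Hs. rewrite exp_Ropp.
  assert (H := exp_ge_cube (s * eta) ltac:(nra)).
  assert (Hp : 0 < (s * eta) ^ 3) by (apply pow_lt; nra).
  apply Rle_trans with (s ^ 2 * / ((s * eta) ^ 3 / 27)).
  - apply Rmult_le_compat_l; [nra |]. apply Rinv_le_contravar; nra.
  - right. field. nra.
Qed.

Lemma RInt_abs_le (f G : R -> R) a b : a <= b -> ex_RInt f a b -> ex_RInt G a b ->
  (forall x, a < x < b -> Rabs (f x) <= G x) -> Rabs (RInt f a b) <= RInt G a b.
Proof.
  intros Hab Hf HG H. apply Rabs_le. split.
  - rewrite <- (RInt_opp G) by auto. apply RInt_le; auto.
    + apply (ex_RInt_opp G); auto.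
    + intros x Hx. specialize (H x Hx). apply Rabs_le_between in H. unfold opp; simpl; lra.
  - apply RInt_le; auto. intros x Hx. specialize (H x Hx). apply Rabs_le_between in H. lra.
Qed.

Lemma RInt_mul_exp_neg_le s del : 0 < s -> 0 <= del ->
  RInt (fun u => u * exp (- (s * u))) 0 del <= / s ^ 2.
Proof.
  intros Hs Hd.
  assert (Hi : is_RInt (fun u => u * exp (- (s * u))) 0 del
     (minus ((fun u => - (u / s + 1 / s ^ 2) * exp (- (s * u))) del)
            ((fun u => - (u / s + 1 / s ^ 2) * exp (- (s * u))) 0))).
  { apply (is_RInt_derive (V := R_CompleteNormedModule)
      (fun u => - (u / s + 1 / s ^ 2) * exp (- (s * u)))).
    - intros x _. auto_derive; auto. field. lra.
    - intros x _. auto 10 with rcont. }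
  rewrite (is_RInt_unique _ _ _ _ Hi).
  change (minus ?p ?q) with (p - q). rewrite Rmult_0_r, Ropp_0, exp_0.
  assert (0 <= (del / s + 1 / s ^ 2) * exp (- (s * del))).
  { apply Rmult_le_pos; [| left; apply exp_pos].
    apply Rplus_le_le_0_compat; apply Rdiv_le_0_compat; try apply pow_lt; lra. }
  replace (/ s ^ 2) with (0 / s + 1 / s ^ 2) by (field; lra). lra.
Qed.

Lemma continuous_exp_weight (w : R -> R) s u :
  continuous w u -> continuous (fun u => exp (- (s * u)) * w u) u.
Proof. auto 10 with rcont. Qed.

Lemma laplace_s2_ext w1 w2 del s : 0 <= del ->
  (forall u, 0 < u < del -> w1 u = w2 u) -> laplace_s2 w1 del s = laplace_s2 w2 del s.
Proof.
  intros Hd H. unfold laplace_s2. f_equal. apply RInt_ext.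
  rewrite Rmin_left, Rmax_right by lra. intros u Hu. rewrite H; auto.
Qed.

Lemma laplace_s2_affine r w1 w2 del s : 0 <= del ->
  (forall u, 0 <= u <= del -> continuous w1 u) ->
  (forall u, 0 <= u <= del -> continuous w2 u) ->
  laplace_s2 (fun u => r * w1 u + w2 u) del s = r * laplace_s2 w1 del s + laplace_s2 w2 del s.
Proof.
  intros Hd H1 H2. unfold laplace_s2.
  assert (E1 : ex_RInt (fun u => exp (- (s * u)) * w1 u) 0 del)
    by (apply ex_RInt_of_continuous; auto; intros; apply continuous_exp_weight; auto).
  assert (E2 : ex_RInt (fun u => exp (- (s * u)) * w2 u) 0 del)
    by (apply ex_RInt_of_continuous; auto; intros; apply continuous_exp_weight; auto).
  rewrite (RInt_ext _ (fun u => plus (scal r (exp (- (s * u)) * w1 u)) (exp (- (s * u)) * w2 u)))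
    by (intros; unfold plus, scal; simpl; unfold mult; simpl; ring).
  rewrite (RInt_plus (V := R_CompleteNormedModule));
    [| apply (ex_RInt_scal (V := R_CompleteNormedModule)); auto | auto].
  rewrite (RInt_scal (V := R_CompleteNormedModule)) by auto.
  unfold plus, scal; simpl; unfold mult; simpl. ring.
Qed.

Lemma laplace_s2_opp w del s : 0 <= del -> (forall u, 0 <= u <= del -> continuous w u) ->
  laplace_s2 (fun u => - w u) del s = - laplace_s2 w del s.
Proof.
  intros Hd H.
  rewrite (laplace_s2_ext _ (fun u => (-1) * w u + 0)) by (auto; intros; ring).
  rewrite laplace_s2_affine by auto 10 with rcont.
  unfold laplace_s2 at 2. rewrite (RInt_ext _ (fun _ => 0)) by (intros; apply Rmult_0_r).
  rewrite RInt_const. unfold scal; simpl; unfold mult; simpl. ring.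
Qed.

Lemma laplace_s2_tail_vanishes w del del' : 0 < del' <= del ->
  (forall u, 0 <= u <= del -> continuous w u) ->
  vanishes_at_infty (fun s => laplace_s2 w del s - laplace_s2 w del' s).
Proof.
  intros Hd H. destruct (continuous_bounded w 0 del) as [B HB]; [lra | auto |].
  assert (HB0 : 0 <= B) by (apply Rle_trans with (Rabs (w 0)); [apply Rabs_pos | apply HB; lra]).
  apply (vanishes_at_infty_of_le_div _ ((del - del') * B * 27 / del' ^ 3)).
  { apply Rdiv_le_0_compat; [| apply pow_lt; lra]. apply Rmult_le_pos; [| lra]. nra. }
  intros s Hs. unfold laplace_s2.
  set (k := fun u => exp (- (s * u)) * w u).
  assert (Ex : forall p q, 0 <= p <= q -> q <= del -> ex_RInt k p q)
    by (intros p q Hp Hq; apply ex_RInt_of_continuous; [lra |];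
        intros; apply continuous_exp_weight, H; lra).
  rewrite <- (RInt_Chasles k 0 del' del) by (apply Ex; lra).
  change (plus ?p ?q) with (p + q).
  replace (s ^ 2 * (RInt k 0 del' + RInt k del' del) - s ^ 2 * RInt k 0 del')
    with (s ^ 2 * RInt k del' del) by ring.
  rewrite Rabs_mult, (Rabs_right (s ^ 2)) by (apply Rle_ge, pow_le; lra).
  assert (Hi : Rabs (RInt k del' del) <= (del - del') * (exp (- (s * del')) * B)).
  { apply abs_RInt_le_const; [lra | apply Ex; lra |].
    intros t Ht. unfold k. rewrite Rabs_mult, Rabs_right by (left; apply exp_pos).
    apply Rmult_le_compat; [left; apply exp_pos | apply Rabs_pos | | apply HB; lra].
    destruct (Req_dec t del') as [-> | Hne]; [lra |]. left; apply exp_increasing. nra. }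
  assert (Hse := sq_mul_exp_neg_le del' s ltac:(lra) ltac:(lra)).
  apply Rle_trans with (s ^ 2 * ((del - del') * (exp (- (s * del')) * B))).
  { apply Rmult_le_compat_l; auto. apply pow_le; lra. }
  replace (s ^ 2 * ((del - del') * (exp (- (s * del')) * B)))
    with (((del - del') * B) * (s ^ 2 * exp (- (s * del')))) by ring.
  apply Rle_trans with (((del - del') * B) * (27 / (del' ^ 3 * s))).
  { apply Rmult_le_compat_l; auto. nra. }
  right. field. split; lra.
Qed.

Lemma laplace_s2_abs_le w eta k s : 0 < eta -> 0 < s ->
  (forall u, 0 <= u <= eta -> continuous w u) ->
  (forall u, 0 <= u <= eta -> Rabs (w u) <= k * u) -> Rabs (laplace_s2 w eta s) <= k.
Proof.
  intros Heta Hs Hc Hw.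
  assert (Hk : 0 <= k).
  { assert (H := Hw eta ltac:(lra)).
    assert (0 <= k * eta) by (eapply Rle_trans; [apply Rabs_pos | apply H]).
    apply (Rmult_le_reg_r eta); lra. }
  assert (Hs2 : 0 < s ^ 2) by (apply pow_lt; lra).
  unfold laplace_s2. rewrite Rabs_mult, (Rabs_right (s ^ 2)) by lra.
  apply Rle_trans with (s ^ 2 * RInt (fun u => k * (u * exp (- (s * u)))) 0 eta).
  - apply Rmult_le_compat_l; [lra |]. apply RInt_abs_le; [lra | | |].
    + apply ex_RInt_of_continuous; [lra |]. intros; apply continuous_exp_weight; auto.
    + apply ex_RInt_of_continuous; [lra |]. auto 10 with rcont.
    + intros u Hu. rewrite Rabs_mult, Rabs_right by (left; apply exp_pos).
      specialize (Hw u ltac:(lra)). assert (0 < exp (- (s * u))) by apply exp_pos. nra.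
  - rewrite (RInt_scal (V := R_CompleteNormedModule) (fun u => u * exp (- (s * u)))).
    2:{ apply ex_RInt_of_continuous; [lra |]. auto 10 with rcont. }
    unfold scal; simpl; unfold mult; simpl.
    assert (H := RInt_mul_exp_neg_le s eta Hs ltac:(lra)).
    apply Rle_trans with (s ^ 2 * (k * / s ^ 2)); [apply Rmult_le_compat_l, Rmult_le_compat_l; lra |].
    right; field; lra.
Qed.

(* The Laplace quotient only sees the germ of w at 0+, and o(u) germs are invisible. *)
Lemma laplace_s2_vanishes_of_o w del : 0 < del ->
  (forall u, 0 <= u <= del -> continuous w u) ->
  (forall eps, 0 < eps -> exists eta, 0 < eta /\
     forall u, 0 <= u <= eta -> u <= del -> Rabs (w u) <= eps * u) ->
  vanishes_at_infty (laplace_s2 w del).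
Proof.
  intros Hd Hc Ho eps He.
  destruct (Ho (eps / 2) ltac:(lra)) as [eta0 [Heta0 Hw]].
  set (eta := Rmin eta0 del).
  assert (Heta : 0 < eta) by (apply Rmin_glb_lt; lra).
  assert (Hetad : eta <= del) by apply Rmin_r.
  assert (Hetae : eta <= eta0) by apply Rmin_l.
  destruct (laplace_s2_tail_vanishes w del eta ltac:(lra) Hc (eps / 2) ltac:(lra)) as [M HM].
  exists (Rmax 1 M). intros s Hs.
  assert (Hs1 := Rle_trans _ _ _ (Rmax_l 1 M) Hs).
  specialize (HM s (Rle_trans _ _ _ (Rmax_r 1 M) Hs)).
  assert (Hnear : Rabs (laplace_s2 w eta s) <= eps / 2).
  { apply laplace_s2_abs_le; try lra.
    - intros; apply Hc; lra.
    - intros u Hu. apply Hw; lra. }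
  replace (laplace_s2 w del s)
    with (laplace_s2 w eta s + (laplace_s2 w del s - laplace_s2 w eta s)) by ring.
  eapply Rle_trans; [apply Rabs_triang | lra].
Qed.

Definition lower_bound_right (U : R -> R) (b x c : R) : Prop :=
  exists del, 0 < del /\ x + del <= b /\ eventually_ge (LD1_right U x del) c.

Definition lower_bound_left (U : R -> R) (a x c : R) : Prop :=
  exists del, 0 < del /\ a <= x - del /\ eventually_ge (LD1_left U x del) c.

Definition is_major (U h : R -> R) (a b : R) : Prop :=
  cont_on U a b /\ forall x, a <= x <= b ->
    (x < b -> lower_bound_right U b x (h x)) /\ (a < x -> lower_bound_left U a x (h x)).

Lemma major_funE U h a b : major_fun U h a b <-> is_major U h a b.
Proof.
  unfold major_fun, is_major, lower_LD_ge, lower_bound_right, lower_bound_left.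
  split; intros [Hc H]; split; auto; intros x Hx; destruct (H x Hx) as [Hr Hl]; split.
  - intros Hb. destruct (Hr Hb) as [d [Hd [Hd2 [Hd3 _]]]].
    exists d; repeat split; auto. apply LimInf_pinfty_ge; auto.
  - intros Ha. destruct (Hl Ha) as [d [Hd [Hd2 [Hd3 _]]]].
    exists d; repeat split; auto. apply LimInf_pinfty_ge; auto.
  - intros Hb. destruct (Hr Hb) as [d [Hd [Hd2 Hd3]]].
    exists d; do 2 (split; auto). apply eventually_ge_LimInf_pinfty; auto.
  - intros Ha. destruct (Hl Ha) as [d [Hd [Hd2 Hd3]]].
    exists d; do 2 (split; auto). apply eventually_ge_LimInf_pinfty; auto.
Qed.

Lemma LD1_right_ext U V x del s : 0 < del ->
  (forall y, x <= y <= x + del -> U y = V y) -> LD1_right U x del s = LD1_right V x del s.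
Proof.
  intros Hd H. rewrite !LD1_right_laplace. apply laplace_s2_ext; [lra |].
  intros u Hu. rewrite !H; lra.
Qed.

Lemma LD1_left_ext U V x del s : 0 < del ->
  (forall y, x - del <= y <= x -> U y = V y) -> LD1_left U x del s = LD1_left V x del s.
Proof.
  intros Hd H. rewrite !LD1_left_laplace. f_equal. apply laplace_s2_ext; [lra |].
  intros u Hu. rewrite !H; lra.
Qed.

Lemma cont_on_of_continuous (U : R -> R) a b :
  (forall t, a <= t <= b -> continuous U t) -> cont_on U a b.
Proof.
  intros H x Hx eps He. destruct (proj1 (continuous_eps U x) (H x Hx) eps He) as [d [Hd Hd2]].
  exists d; split; auto.
Qed.

Definition clamp (a b t : R) : R := Rmax a (Rmin b t).

Lemma clamp_in a b t : a <= b -> a <= clamp a b t <= b.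
Proof. intros; unfold clamp, Rmax, Rmin; repeat destruct Rle_dec; lra. Qed.

Lemma clamp_id a b t : a <= t <= b -> clamp a b t = t.
Proof. intros; unfold clamp, Rmax, Rmin; repeat destruct Rle_dec; lra. Qed.

Lemma clamp_lipschitz a b y t : a <= b -> Rabs (clamp a b y - clamp a b t) <= Rabs (y - t).
Proof.
  intros; unfold clamp, Rmax, Rmin; repeat destruct Rle_dec;
    unfold Rabs; repeat destruct Rcase_abs; lra.
Qed.

Lemma continuous_clamp U a b : a <= b -> cont_on U a b ->
  forall t, continuous (fun y => U (clamp a b y)) t.
Proof.
  intros Hab Hc t. apply continuous_eps. intros eps He.
  destruct (Hc (clamp a b t) (clamp_in a b t Hab) eps He) as [d [Hd Hd2]].
  exists d; split; auto. intros y Hy. apply Hd2; [apply clamp_in; auto |].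
  eapply Rle_lt_trans; [apply clamp_lipschitz |]; auto.
Qed.

Lemma major_clamp U h a b : a <= b -> major_fun U h a b ->
  major_fun (fun y => U (clamp a b y)) h a b.
Proof.
  rewrite !major_funE. intros Hab [Hc H]. split.
  - apply cont_on_of_continuous. intros; apply continuous_clamp; auto.
  - intros x Hx. destruct (H x Hx) as [Hr Hl]. split.
    + intros Hb. destruct (Hr Hb) as [d [Hd [Hd2 Hd3]]]. exists d; repeat split; auto.
      apply (eventually_ge_ext (LD1_right U x d)); auto.
      intros s. apply LD1_right_ext; auto. intros y Hy. rewrite clamp_id; lra.
    + intros Ha. destruct (Hl Ha) as [d [Hd [Hd2 Hd3]]]. exists d; repeat split; auto.
      apply (eventually_ge_ext (LD1_left U x d)); auto.
      intros s. apply LD1_left_ext; auto. intros y Hy. rewrite clamp_id; lra.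
Qed.

Lemma major_add_const U h a b k : major_fun U h a b -> major_fun (fun y => U y + k) h a b.
Proof.
  rewrite !major_funE. intros [Hc H]. split.
  - intros x Hx eps He. destruct (Hc x Hx eps He) as [d [Hd Hd2]]. exists d; split; auto.
    intros y Hy Hy2. replace (U y + k - (U x + k)) with (U y - U x) by ring. auto.
  - intros x Hx. destruct (H x Hx) as [Hr Hl]. split.
    + intros Hb. destruct (Hr Hb) as [d [Hd [Hd2 Hd3]]]. exists d; repeat split; auto.
      apply (eventually_ge_ext (LD1_right U x d)); auto.
      intros s. rewrite !LD1_right_laplace. apply laplace_s2_ext; [lra | intros; ring].
    + intros Ha. destruct (Hl Ha) as [d [Hd [Hd2 Hd3]]]. exists d; repeat split; auto.
      apply (eventually_ge_ext (LD1_left U x d)); auto.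
      intros s. rewrite !LD1_left_laplace. f_equal. apply laplace_s2_ext; [lra | intros; ring].
Qed.

Lemma major_ext U h1 h2 a b : (forall x, a <= x <= b -> h1 x = h2 x) ->
  major_fun U h1 a b -> major_fun U h2 a b.
Proof.
  rewrite !major_funE. intros E [Hc H]. split; auto.
  intros x Hx. rewrite <- (E x Hx). auto.
Qed.

Lemma LD1_right_shrink U x d d' c : (forall t, continuous U t) -> 0 < d' <= d ->
  eventually_ge (LD1_right U x d) c -> eventually_ge (LD1_right U x d') c.
Proof.
  intros HU Hd H. set (w := fun u => U (x + u) - U x).
  replace c with (1 * c) by ring.
  apply (eventually_ge_ext (fun s => 1 * LD1_right U x d s
    + - (laplace_s2 w d s - laplace_s2 w d' s))).
  { intros s. rewrite !LD1_right_laplace. fold w. ring. }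
  apply eventually_ge_affine; auto; [lra |].
  apply vanishes_at_infty_opp, laplace_s2_tail_vanishes; auto.
  intros u _. unfold w. apply continuous_Rminus; [| apply continuous_const].
  apply (continuous_shift U x 1 u) in HU.
  revert HU; apply continuous_ext; intros; rewrite Rmult_1_l; auto.
Qed.

Lemma LD1_left_shrink U x d d' c : (forall t, continuous U t) -> 0 < d' <= d ->
  eventually_ge (LD1_left U x d) c -> eventually_ge (LD1_left U x d') c.
Proof.
  intros HU Hd H. set (w := fun u => U (x - u) - U x).
  replace c with (1 * c) by ring.
  apply (eventually_ge_ext (fun s => 1 * LD1_left U x d s
    + (laplace_s2 w d s - laplace_s2 w d' s))).
  { intros s. rewrite !LD1_left_laplace. fold w. ring. }
  apply eventually_ge_affine; auto; [lra |].
  apply laplace_s2_tail_vanishes; auto.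
  intros u _. unfold w. apply continuous_Rminus; [| apply continuous_const].
  apply (continuous_shift U x (-1) u) in HU.
  revert HU; apply continuous_ext; intros; f_equal; ring.
Qed.

Lemma major_restrict U h a b a' b' : (forall t, continuous U t) ->
  a <= a' -> a' <= b' -> b' <= b -> major_fun U h a b -> major_fun U h a' b'.
Proof.
  rewrite !major_funE. intros HU Ha Hab Hb [_ H]. split.
  { apply cont_on_of_continuous; auto. }
  intros x Hx. destruct (H x ltac:(lra)) as [Hr Hl]. split.
  - intros Hxb. destruct (Hr ltac:(lra)) as [d [Hd [_ Hd3]]].
    exists (Rmin d (b' - x)).
    assert (0 < Rmin d (b' - x) <= d) by (split; [apply Rmin_glb_lt; lra | apply Rmin_l]).
    assert (Rmin d (b' - x) <= b' - x) by apply Rmin_r.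
    repeat split; try lra. apply (LD1_right_shrink U x d); auto.
  - intros Hxa. destruct (Hl ltac:(lra)) as [d [Hd [_ Hd3]]].
    exists (Rmin d (x - a')).
    assert (0 < Rmin d (x - a') <= d) by (split; [apply Rmin_glb_lt; lra | apply Rmin_l]).
    assert (Rmin d (x - a') <= x - a') by apply Rmin_r.
    repeat split; try lra. apply (LD1_left_shrink U x d); auto.
Qed.

Definition glue (t : R) (U1 U2 : R -> R) (y : R) : R :=
  if Rle_dec y t then U1 y else U2 y.

Lemma glue_l t U1 U2 y : y <= t -> glue t U1 U2 y = U1 y.
Proof. intros; unfold glue; destruct Rle_dec; lra. Qed.

Lemma glue_r t U1 U2 y : U1 t = U2 t -> t <= y -> glue t U1 U2 y = U2 y.
Proof.
  intros E Hy; unfold glue; destruct Rle_dec; auto.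
  replace y with t by lra. auto.
Qed.

Lemma cont_on_glue U1 U2 a t c : a <= t <= c -> U1 t = U2 t ->
  cont_on U1 a t -> cont_on U2 t c -> cont_on (glue t U1 U2) a c.
Proof.
  intros Ht E C1 C2 x Hx eps He.
  destruct (Rlt_le_dec x t) as [Hxt | Hxt]; [| destruct (Req_dec x t) as [-> | Hne]].
  - destruct (C1 x ltac:(lra) eps He) as [d [Hd Hd']].
    exists (Rmin d (t - x)); split; [apply Rmin_glb_lt; lra |].
    intros y Hy Hyd. assert (Rmin d (t - x) <= d) by apply Rmin_l.
    assert (Rmin d (t - x) <= t - x) by apply Rmin_r. apply Rabs_def2 in Hyd.
    rewrite !glue_l by lra. apply Hd'; [lra | apply Rabs_def1; lra].
  - destruct (C1 t ltac:(lra) eps He) as [d1 [Hd1 Hd1']].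
    destruct (C2 t ltac:(lra) eps He) as [d2 [Hd2 Hd2']].
    exists (Rmin d1 d2); split; [apply Rmin_glb_lt; lra |].
    intros y Hy Hyd. assert (Rmin d1 d2 <= d1) by apply Rmin_l.
    assert (Rmin d1 d2 <= d2) by apply Rmin_r.
    rewrite (glue_l t U1 U2 t) by lra.
    destruct (Rle_dec y t).
    + rewrite glue_l by lra. apply Hd1'; lra.
    + rewrite glue_r, E by (auto; lra). apply Hd2'; lra.
  - destruct (C2 x ltac:(lra) eps He) as [d [Hd Hd']].
    exists (Rmin d (x - t)); split; [apply Rmin_glb_lt; lra |].
    intros y Hy Hyd. assert (Rmin d (x - t) <= d) by apply Rmin_l.
    assert (Rmin d (x - t) <= x - t) by apply Rmin_r. apply Rabs_def2 in Hyd.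
    rewrite !glue_r by (auto; lra). apply Hd'; [lra | apply Rabs_def1; lra].
Qed.

Lemma major_glue U1 U2 h a t c : a <= t <= c -> U1 t = U2 t ->
  major_fun U1 h a t -> major_fun U2 h t c -> major_fun (glue t U1 U2) h a c.
Proof.
  rewrite !major_funE. intros Ht E [C1 H1] [C2 H2].
  split; [apply cont_on_glue; auto |].
  intros x Hx. split.
  - intros Hxc. destruct (Rlt_le_dec x t) as [Hxt | Hxt].
    + destruct (proj1 (H1 x ltac:(lra)) Hxt) as [d [Hd [Hd2 Hd3]]].
      exists d; repeat split; [auto | lra |].
      apply (eventually_ge_ext (LD1_right U1 x d)); auto.
      intros s. apply LD1_right_ext; auto. intros y Hy. rewrite glue_l; lra.
    + destruct (proj1 (H2 x ltac:(lra)) Hxc) as [d [Hd [Hd2 Hd3]]].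
      exists d; repeat split; auto.
      apply (eventually_ge_ext (LD1_right U2 x d)); auto.
      intros s. apply LD1_right_ext; auto. intros y Hy. rewrite glue_r; auto; lra.
  - intros Hxa. destruct (Rle_lt_dec x t) as [Hxt | Hxt].
    + destruct (proj2 (H1 x ltac:(lra)) Hxa) as [d [Hd [Hd2 Hd3]]].
      exists d; repeat split; auto.
      apply (eventually_ge_ext (LD1_left U1 x d)); auto.
      intros s. apply LD1_left_ext; auto. intros y Hy. rewrite glue_l; lra.
    + destruct (proj2 (H2 x ltac:(lra)) Hxt) as [d [Hd [Hd2 Hd3]]].
      exists d; repeat split; [auto | lra |].
      apply (eventually_ge_ext (LD1_left U2 x d)); auto.
      intros s. apply LD1_left_ext; auto. intros y Hy. rewrite glue_r; auto; lra.
Qed.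

Lemma cont_on_opp V a b : cont_on V a b -> cont_on (fun t => - V t) a b.
Proof.
  intros H x Hx eps He. destruct (H x Hx eps He) as [d [Hd Hd2]]. exists d; split; auto.
  intros y Hy Hy2. replace (- V y - - V x) with (- (V y - V x)) by ring.
  rewrite Rabs_Ropp. auto.
Qed.

Lemma LD1_right_opp V a b x del s : a <= x -> 0 < del -> x + del <= b -> cont_on V a b ->
  LD1_right (fun t => - V t) x del s = - LD1_right V x del s.
Proof.
  intros Hx Hd Hb Hc. set (Vc := fun t => V (clamp a b t)).
  rewrite (LD1_right_ext (fun t => - V t) (fun t => - Vc t)), (LD1_right_ext V Vc)
    by (auto; intros; unfold Vc; rewrite clamp_id; lra).
  rewrite !LD1_right_laplace, <- laplace_s2_opp; [| lra |].
  - apply laplace_s2_ext; [lra | intros; ring].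
  - intros u _. apply continuous_Rminus; [| apply continuous_const].
    apply (continuous_comp (fun u => x + u) Vc); auto 10 with rcont.
    apply continuous_clamp; auto; lra.
Qed.

Lemma LD1_left_opp V a b x del s : x <= b -> 0 < del -> a <= x - del -> cont_on V a b ->
  LD1_left (fun t => - V t) x del s = - LD1_left V x del s.
Proof.
  intros Hx Hd Hb Hc. set (Vc := fun t => V (clamp a b t)).
  rewrite (LD1_left_ext (fun t => - V t) (fun t => - Vc t)), (LD1_left_ext V Vc)
    by (auto; intros; unfold Vc; rewrite clamp_id; lra).
  rewrite !LD1_left_laplace. f_equal. rewrite <- laplace_s2_opp; [| lra |].
  - apply laplace_s2_ext; [lra | intros; ring].
  - intros u _. apply continuous_Rminus; [| apply continuous_const].
    apply (continuous_comp (fun u => x - u) Vc); auto 10 with rcont.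
    apply continuous_clamp; auto; lra.
Qed.

Lemma minor_funE V h a b :
  minor_fun V h a b <-> major_fun (fun t => - V t) (fun t => - h t) a b.
Proof.
  rewrite major_funE. unfold minor_fun, is_major, upper_LD_le, lower_bound_right, lower_bound_left.
  split.
  - intros [Hc H]. split; [apply cont_on_opp; auto |].
    intros x Hx; destruct (H x Hx) as [Hr Hl]; split.
    + intros Hb; destruct (Hr Hb) as [d [Hd [Hd2 [Hd3 _]]]]. exists d; repeat split; auto.
      apply (eventually_ge_ext (fun s => - LD1_right V x d s)); [| apply LimSup_pinfty_le; auto].
      intros s. rewrite (LD1_right_opp V a b); auto; lra.
    + intros Ha; destruct (Hl Ha) as [d [Hd [Hd2 [Hd3 _]]]]. exists d; repeat split; auto.
      apply (eventually_ge_ext (fun s => - LD1_left V x d s)); [| apply LimSup_pinfty_le; auto].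
      intros s. rewrite (LD1_left_opp V a b); auto; lra.
  - intros [Hc H].
    assert (Hc' : cont_on V a b).
    { apply cont_on_opp in Hc. intros x Hx eps He. destruct (Hc x Hx eps He) as [d [Hd Hd2]].
      exists d; split; auto. intros y Hy Hy2. specialize (Hd2 y Hy Hy2).
      rewrite !Ropp_involutive in Hd2. auto. }
    split; auto. intros x Hx; destruct (H x Hx) as [Hr Hl]; split.
    + intros Hb; destruct (Hr Hb) as [d [Hd [Hd2 Hd3]]]. exists d; do 2 (split; auto).
      apply eventually_ge_LimSup_pinfty.
      revert Hd3. apply eventually_ge_ext. intros s. rewrite (LD1_right_opp V a b); auto; lra.
    + intros Ha; destruct (Hl Ha) as [d [Hd [Hd2 Hd3]]]. exists d; do 2 (split; auto).
      apply eventually_ge_LimSup_pinfty.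
      revert Hd3. apply eventually_ge_ext. intros s. rewrite (LD1_left_opp V a b); auto; lra.
Qed.

Definition is_upper_int (h : R -> R) (a b I : R) : Prop :=
  (forall U, major_fun U h a b -> I <= U b - U a) /\
  (forall eps, 0 < eps -> exists U, major_fun U h a b /\ U b - U a <= I + eps).

Lemma is_glb_major_iff h a b I :
  is_glb_Rbar (fun y => exists U, major_fun U h a b /\ y = U b - U a) (Finite I) <->
  is_upper_int h a b I.
Proof.
  split.
  - intros [Hlb Hg]. split.
    + intros U HU. apply (Hlb (U b - U a)). exists U; auto.
    + intros eps He. apply NNPP; intros Hn.
      enough (Rbar_le (Finite (I + eps)) (Finite I)) by (simpl in *; lra).
      apply Hg. intros y [U [HU ->]]. simpl.
      apply Rnot_lt_le; intros Hl. apply Hn. exists U; split; auto; lra.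
  - intros [H1 H2]. split.
    + intros y [U [HU ->]]. simpl. auto.
    + intros [l | |] Hl; simpl; auto.
      * apply Rnot_lt_le; intros Hlt. destruct (H2 ((l - I) / 2) ltac:(lra)) as [U [HU HU2]].
        specialize (Hl (U b - U a) (ex_intro _ U (conj HU eq_refl))). simpl in Hl. lra.
      * destruct (H2 1 Rlt_0_1) as [U [HU _]]. apply (Hl (U b - U a)). exists U; auto.
Qed.

Lemma major_fun_opp_opp U h a b :
  major_fun U h a b -> major_fun (fun t => - - U t) h a b.
Proof.
  replace (fun t => - - U t) with U; auto.
  apply functional_extensionality; intros; ring.
Qed.

Lemma is_lub_minor_iff h a b I :
  is_lub_Rbar (fun y => exists V, minor_fun V h a b /\ y = V b - V a) (Finite I) <->
  is_upper_int (fun t => - h t) a b (- I).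
Proof.
  split.
  - intros [Hub Hg]. split.
    + intros U HU. enough (- U b - - U a <= I) by lra.
      apply (Hub (- U b - - U a)). exists (fun t => - U t). split; auto.
      apply minor_funE, major_fun_opp_opp; auto.
    + intros eps He. apply NNPP; intros Hn.
      enough (Rbar_le (Finite I) (Finite (I - eps))) by (simpl in *; lra).
      apply Hg. intros y [V [HV ->]]. simpl. apply Rnot_lt_le; intros Hl. apply Hn.
      exists (fun t => - V t). split; [apply minor_funE; auto | lra].
  - intros [H1 H2]. split.
    + intros y [V [HV ->]]. simpl. apply minor_funE, H1 in HV. lra.
    + intros [l | |] Hl; simpl; auto.
      * apply Rnot_lt_le; intros Hlt. destruct (H2 ((I - l) / 2) ltac:(lra)) as [U [HU HU2]].
        assert (HV : minor_fun (fun t => - U t) h a b) by (apply minor_funE, major_fun_opp_opp; auto).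
        specialize (Hl _ (ex_intro _ _ (conj HV eq_refl))). simpl in Hl. lra.
      * destruct (H2 1 Rlt_0_1) as [U [HU _]].
        assert (HV : minor_fun (fun t => - U t) h a b) by (apply minor_funE, major_fun_opp_opp; auto).
        apply (Hl _ (ex_intro _ _ (conj HV eq_refl))).
Qed.

Lemma is_LaplaceInt_iff h a b I :
  is_LaplaceInt h a b I <-> is_upper_int h a b I /\ is_upper_int (fun t => - h t) a b (- I).
Proof. unfold is_LaplaceInt. rewrite is_glb_major_iff, is_lub_minor_iff. tauto. Qed.

Lemma is_upper_int_point h a : is_upper_int h a a 0.
Proof.
  split; [intros; lra |]. intros eps He. exists (fun _ => 0). split; [| lra].
  apply major_funE. split; [| intros x Hx; split; intros; lra].
  intros x _ e He'. exists 1; split; [lra |]. intros. rewrite Rminus_diag, Rabs_R0; auto.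
Qed.

Lemma is_LaplaceInt_point h a : is_LaplaceInt h a a 0.
Proof. apply is_LaplaceInt_iff. rewrite Ropp_0. split; apply is_upper_int_point. Qed.

Lemma is_LaplaceInt_unique h a b I1 I2 :
  is_LaplaceInt h a b I1 -> is_LaplaceInt h a b I2 -> I1 = I2.
Proof.
  intros [H1 _] [H2 _]. apply is_glb_Rbar_unique in H1, H2.
  rewrite H1 in H2. injection H2; auto.
Qed.

Lemma is_upper_int_ext h1 h2 a b I : (forall x, a <= x <= b -> h1 x = h2 x) ->
  is_upper_int h1 a b I -> is_upper_int h2 a b I.
Proof.
  intros E [H1 H2]. split.
  - intros U HU. apply H1, (major_ext U h2); auto. intros; symmetry; auto.
  - intros eps He. destruct (H2 eps He) as [U [HU HU2]].
    exists U; split; auto. apply (major_ext U h1); auto.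
Qed.

Lemma is_LaplaceInt_ext h1 h2 a b I : (forall x, a <= x <= b -> h1 x = h2 x) ->
  is_LaplaceInt h1 a b I -> is_LaplaceInt h2 a b I.
Proof.
  rewrite !is_LaplaceInt_iff. intros E [H1 H2].
  split; [apply (is_upper_int_ext h1) | apply (is_upper_int_ext (fun t => - h1 t))]; auto.
  intros x Hx. rewrite E; auto.
Qed.

Lemma ex_RInt_of_continuous_lt (f : R -> R) x0 p q :
  (forall t, t < x0 -> continuous f t) -> p < x0 -> q < x0 -> ex_RInt f p q.
Proof.
  intros H Hp Hq. apply (ex_RInt_continuous (V := R_CompleteNormedModule)).
  intros z Hz. apply H. assert (Rmax p q < x0) by (apply Rmax_lub_lt; auto). lra.
Qed.

Lemma continuous_RInt_lt (f : R -> R) a x0 t :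
  (forall t, t < x0 -> continuous f t) -> a < x0 -> t < x0 ->
  continuous (fun z => RInt f a z) t.
Proof.
  intros H Ha Ht. apply (continuous_RInt_1 (V := R_CompleteNormedModule) f a t).
  assert (Hr : 0 < x0 - t) by lra. exists (mkposreal _ Hr). intros z Hz.
  apply (RInt_correct (V := R_CompleteNormedModule)), (ex_RInt_of_continuous_lt f x0); auto.
  change (Rabs (z - t) < x0 - t) in Hz. apply Rabs_def2 in Hz. lra.
Qed.

Lemma RInt_abs_le_const (f : R -> R) p q M : ex_RInt f p q ->
  (forall s, Rmin p q <= s <= Rmax p q -> Rabs (f s) <= M) ->
  Rabs (RInt f p q) <= Rabs (q - p) * M.
Proof.
  intros He H. destruct (Rle_lt_dec p q).
  - rewrite (Rabs_right (q - p)) by lra. apply abs_RInt_le_const; auto.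
    intros; apply H. rewrite Rmin_left, Rmax_right; lra.
  - assert (He' : ex_RInt f q p) by (apply (ex_RInt_swap (V := R_CompleteNormedModule)); auto).
    rewrite <- (opp_RInt_swap (V := R_CompleteNormedModule)) by auto.
    change (opp ?y) with (- y). rewrite Rabs_Ropp, (Rabs_left (q - p)), Ropp_minus_distr by lra.
    apply abs_RInt_le_const; [lra | auto |].
    intros; apply H. rewrite Rmin_right, Rmax_left; lra.
Qed.

Lemma vanishes_at_infty_scal r Y : vanishes_at_infty Y -> vanishes_at_infty (fun s => r * Y s).
Proof.
  intros H eps He. destruct (H (eps / (Rabs r + 1))) as [M HM].
  { apply Rdiv_lt_0_compat; [lra | assert (0 <= Rabs r) by apply Rabs_pos; lra]. }
  exists M. intros s Hs. specialize (HM s Hs). rewrite Rabs_mult.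
  assert (0 <= Rabs r) by apply Rabs_pos.
  apply Rle_trans with ((Rabs r + 1) * (eps / (Rabs r + 1))).
  - apply Rmult_le_compat; try lra; apply Rabs_pos.
  - right. field. lra.
Qed.

Section MajorWeight.

Variables (U h rho drho : R -> R) (a c x0 : R).
Hypotheses (Hac : a <= c) (Hcx : c < x0) (HU : forall t, continuous U t)
  (Hrho : forall t, t < x0 -> is_derive rho t (drho t))
  (Hdrho : forall t, t < x0 -> continuous drho t).

Let T (t : R) : R := rho t * U t - RInt (fun s => U s * drho s) a t.

Lemma continuous_weighted : forall t, t < x0 -> continuous T t.
Proof.
  intros t Ht. unfold T. apply continuous_Rminus.
  - apply continuous_Rmult; auto.
    apply (ex_derive_continuous (K := R_AbsRing) (V := R_NormedModule)).
    exists (drho t); auto.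
  - apply (continuous_RInt_lt _ a x0); [| lra | auto].
    intros; apply continuous_Rmult; auto.
Qed.

Lemma weighted_defect_eq p q : p < x0 -> q < x0 ->
  T q - T p - rho p * (U q - U p) = RInt (fun s => drho s * (U q - U s)) p q.
Proof.
  intros Hp Hq. unfold T.
  assert (Hmax : Rmax p q < x0) by (apply Rmax_lub_lt; auto).
  assert (Ea : forall u v, u < x0 -> v < x0 -> ex_RInt (fun s => U s * drho s) u v)
    by (intros; apply (ex_RInt_of_continuous_lt _ x0); auto; intros; apply continuous_Rmult; auto).
  assert (Ed : ex_RInt drho p q) by (apply (ex_RInt_of_continuous_lt _ x0); auto).
  rewrite <- (RInt_Chasles (V := R_CompleteNormedModule) (fun s => U s * drho s) a p q)
    by (apply Ea; lra).
  assert (Hr : is_RInt drho p q (minus (rho q) (rho p))).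
  { apply (is_RInt_derive (V := R_CompleteNormedModule) rho drho);
      intros; [apply Hrho | apply Hdrho]; lra. }
  apply (is_RInt_unique (V := R_CompleteNormedModule)) in Hr.
  rewrite (RInt_ext (V := R_CompleteNormedModule) (fun s => drho s * (U q - U s))
    (fun s => minus (scal (U q) (drho s)) (U s * drho s)))
    by (intros x _; change (drho x * (U q - U x) = U q * drho x + - (U x * drho x)); ring).
  rewrite (RInt_minus (V := R_CompleteNormedModule)), (RInt_scal (V := R_CompleteNormedModule));
    auto; [| apply (ex_RInt_scal (V := R_CompleteNormedModule)); auto].
  change (minus ?y ?z) with (y - z) in *. change (plus ?y ?z) with (y + z).
  change (scal ?y ?z) with (y * z). rewrite Hr. ring.
Qed.

Lemma weighted_defect_small p : a <= p <= c -> forall eps, 0 < eps -> exists eta, 0 < eta /\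
  forall q, a <= q <= c -> Rabs (q - p) <= eta ->
    Rabs (T q - T p - rho p * (U q - U p)) <= eps * Rabs (q - p).
Proof.
  intros Hp eps He.
  destruct (continuous_bounded drho a c Hac) as [Kd HKd]; [intros; apply Hdrho; lra |].
  assert (HKd0 : 0 <= Kd) by (apply Rle_trans with (Rabs (drho a)); [apply Rabs_pos | apply HKd; lra]).
  set (e1 := eps / (2 * (Kd + 1))).
  assert (He1 : 0 < e1) by (apply Rdiv_lt_0_compat; lra).
  destruct (proj1 (continuous_eps U p) (HU p) e1 He1) as [eta [Heta Hclose]].
  exists (eta / 2); split; [lra |]. intros q Hq Hqp.
  rewrite weighted_defect_eq by lra.
  apply Rle_trans with (Rabs (q - p) * (Kd * (2 * e1))).
  - apply RInt_abs_le_const.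
    { apply (ex_RInt_of_continuous_lt _ x0); try lra.
      intros; apply continuous_Rmult; auto 10 with rcont. }
    intros s Hs. assert (Hmin := Rmin_glb a q p). assert (Hmax := Rmax_lub c q p).
    rewrite Rabs_mult. apply Rmult_le_compat; try apply Rabs_pos.
    + apply HKd. split; [apply Rle_trans with (Rmin p q) | apply Rle_trans with (Rmax p q)];
        try lra; [apply Rmin_glb | apply Rmax_lub]; lra.
    + assert (Hs1 : Rabs (s - p) < eta).
      { apply Rabs_le_between in Hqp. unfold Rmin, Rmax in Hs.
        destruct Rle_dec; apply Rabs_def1; lra. }
      assert (A1 := Hclose s Hs1). assert (A2 := Hclose q ltac:(lra)).
      replace (U q - U s) with ((U q - U p) - (U s - U p)) by ring.
      eapply Rle_trans; [apply Rabs_triang | rewrite Rabs_Ropp; lra].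
  - rewrite Rmult_comm. apply Rmult_le_compat_r; [apply Rabs_pos |].
    unfold e1. replace (Kd * (2 * (eps / (2 * (Kd + 1))))) with (eps * (Kd / (Kd + 1)))
      by (field; lra).
    rewrite <- (Rmult_1_r eps) at 2. apply Rmult_le_compat_l; [lra |].
    apply (Rdiv_le_1 Kd (Kd + 1)); lra.
Qed.

(* sg = 1 gives the right Laplace quotient, sg = -1 the left one. *)
Lemma weighted_lower_bound_side (sg : R) x d k : sg = 1 \/ sg = -1 -> a <= x <= c ->
  0 <= rho x -> 0 < d ->
  (forall u, 0 <= u <= d -> a <= x + sg * u <= c) ->
  eventually_ge (fun s => sg * laplace_s2 (fun u => U (x + sg * u) - U x) d s) k ->
  eventually_ge (fun s => sg * laplace_s2 (fun u => T (x + sg * u) - T x) d s) (rho x * k).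
Proof.
  intros Hsg Hx Hr Hd Hwin H.
  assert (Habs : Rabs sg = 1)
    by (destruct Hsg as [-> | ->]; unfold Rabs; destruct Rcase_abs; lra).
  set (e := fun u => T (x + sg * u) - T x - rho x * (U (x + sg * u) - U x)).
  assert (Ce : forall u, 0 <= u <= d -> continuous e u).
  { intros u Hu. specialize (Hwin u Hu). unfold e. apply continuous_Rminus.
    - apply continuous_Rminus; [| apply continuous_const].
      apply continuous_shift, continuous_weighted; lra.
    - apply continuous_Rmult; [apply continuous_const |].
      apply continuous_Rminus; [apply continuous_shift, HU | apply continuous_const]. }
  apply (eventually_ge_ext (fun s => rho x * (sg * laplace_s2 (fun u => U (x + sg * u) - U x) d s)
    + sg * laplace_s2 e d s)).
  - intros s. rewrite <- Rmult_assoc, (Rmult_comm (rho x)), Rmult_assoc, <- Rmult_plus_distr_l.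
    f_equal. rewrite <- laplace_s2_affine; [| lra | | auto].
    + apply laplace_s2_ext; [lra | intros; unfold e; ring].
    + intros u Hu. specialize (Hwin u Hu).
      apply continuous_Rminus; [apply continuous_shift, HU | apply continuous_const].
  - apply eventually_ge_affine; auto.
    apply vanishes_at_infty_scal, laplace_s2_vanishes_of_o; auto.
    intros eps He. destruct (weighted_defect_small x Hx eps He) as [eta [Heta Hsmall]].
    exists eta; split; auto. intros u Hu Hud. unfold e.
    replace u with (Rabs (x + sg * u - x)) at 3
      by (replace (x + sg * u - x) with (sg * u) by ring; rewrite Rabs_mult, Habs, Rabs_right; lra).
    apply Hsmall; [apply Hwin; lra |].
    replace (x + sg * u - x) with (sg * u) by ring. rewrite Rabs_mult, Habs, Rabs_right; lra.
Qed.

Lemma major_weighted : (forall t, a <= t <= c -> 0 <= rho t) ->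
  major_fun U h a c -> major_fun T (fun t => rho t * h t) a c.
Proof.
  rewrite !major_funE. intros Hr [_ H]. split.
  { apply cont_on_of_continuous. intros; apply continuous_weighted; lra. }
  intros x Hx. destruct (H x Hx) as [Hright Hleft]. split.
  - intros Hxc. destruct (Hright Hxc) as [d [Hd [Hd2 Hd3]]]. exists d; repeat split; auto.
    assert (E : forall V s, LD1_right V x d s = 1 * laplace_s2 (fun u => V (x + 1 * u) - V x) d s).
    { intros V s. rewrite LD1_right_laplace, Rmult_1_l.
      apply laplace_s2_ext; [lra | intros; rewrite Rmult_1_l; auto]. }
    apply (eventually_ge_ext _ _ _ (fun s => eq_sym (E T s))).
    apply weighted_lower_bound_side; auto; [intros; lra |].
    revert Hd3; apply eventually_ge_ext; auto.
  - intros Hxa. destruct (Hleft Hxa) as [d [Hd [Hd2 Hd3]]]. exists d; repeat split; auto.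
    assert (E : forall V s, LD1_left V x d s = -1 * laplace_s2 (fun u => V (x + -1 * u) - V x) d s).
    { intros V s. rewrite LD1_left_laplace.
      rewrite (laplace_s2_ext (fun u => V (x + -1 * u) - V x) (fun u => V (x - u) - V x))
        by (lra || intros; do 2 f_equal; ring).
      ring. }
    apply (eventually_ge_ext _ _ _ (fun s => eq_sym (E T s))).
    apply weighted_lower_bound_side; auto; [intros; lra |].
    revert Hd3; apply eventually_ge_ext; auto.
Qed.

End MajorWeight.

Lemma is_derive_pow_sub x m t :
  is_derive (fun t => (x - t) ^ S m) t (- INR (S m) * (x - t) ^ m).
Proof.
  replace (- INR (S m) * (x - t) ^ m) with (INR (S m) * - (1) * (x - t) ^ Nat.pred (S m))
    by (cbn [Nat.pred]; ring).
  apply (is_derive_pow (fun t => x - t)). auto_derive; auto.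
Qed.

Lemma is_derive_inv_pow_sub x m t : t < x ->
  is_derive (fun t => / (x - t) ^ S m) t (INR (S m) * / (x - t) ^ S (S m)).
Proof.
  intros H. assert (Hp : forall k, (x - t) ^ k <> 0) by (intros; apply pow_nonzero; lra).
  replace (INR (S m) * / (x - t) ^ S (S m))
    with (- (- INR (S m) * (x - t) ^ m) / ((x - t) ^ S m) ^ 2)
    by (cbn [pow]; field; split; [apply Hp | lra]).
  apply (is_derive_inv (fun t => (x - t) ^ S m)); [apply is_derive_pow_sub | apply Hp].
Qed.

Lemma continuous_inv_pow_sub x m t : t < x ->
  continuous (fun t => / (x - t) ^ S m) t.
Proof.
  intros H. apply (ex_derive_continuous (K := R_AbsRing) (V := R_NormedModule)).
  eexists. apply is_derive_inv_pow_sub; auto.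
Qed.

Lemma RInt_pow_sub x m a : RInt (fun t => INR (S m) * (x - t) ^ m) a x = (x - a) ^ S m.
Proof.
  assert (H : is_RInt (fun t => INR (S m) * (x - t) ^ m) a x
    (minus ((fun t => - (x - t) ^ S m) x) ((fun t => - (x - t) ^ S m) a))).
  { apply (is_RInt_derive (V := R_CompleteNormedModule) (fun t => - (x - t) ^ S m)).
    - intros t _. replace (INR (S m) * (x - t) ^ m) with (- (- INR (S m) * (x - t) ^ m)) by ring.
      apply (is_derive_opp (fun t => (x - t) ^ S m)), is_derive_pow_sub.
    - intros t _. auto 10 with rcont. }
  rewrite (is_RInt_unique _ _ _ _ H). change (minus ?p ?q) with (p - q).
  rewrite Rminus_diag. simpl. ring.
Qed.

Lemma major_normalize U h a b : a <= b -> major_fun U h a b ->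
  exists U1, major_fun U1 h a b /\ (forall t, continuous U1 t) /\ U1 a = 0 /\ U1 b = U b - U a.
Proof.
  intros Hab HU. exists (fun t => U (clamp a b t) + - U a).
  assert (Hc : cont_on U a b) by (apply major_funE in HU; apply HU).
  split; [apply major_add_const, major_clamp; auto |].
  split; [intros; apply continuous_Rplus; [apply continuous_clamp | apply continuous_const]; auto |].
  rewrite !clamp_id by lra. split; ring.
Qed.

Lemma continuous_le_left_end (f g : R -> R) a x : a < x ->
  continuous f x -> continuous g x -> (forall t, a <= t < x -> f t <= g t) -> f x <= g x.
Proof.
  intros Hax Hf Hg H. apply Rnot_lt_le. intros Hlt. set (e := (f x - g x) / 2).
  destruct (proj1 (continuous_eps f x) Hf e ltac:(unfold e; lra)) as [n1 [Hn1 Hf']].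
  destruct (proj1 (continuous_eps g x) Hg e ltac:(unfold e; lra)) as [n2 [Hn2 Hg']].
  set (d := Rmin (Rmin n1 n2) (x - a)).
  assert (Hd : 0 < d) by (repeat apply Rmin_glb_lt; lra).
  assert (d <= n1) by (eapply Rle_trans; [apply Rmin_l | apply Rmin_l]).
  assert (d <= n2) by (eapply Rle_trans; [apply Rmin_l | apply Rmin_r]).
  assert (d <= x - a) by apply Rmin_r.
  assert (Ht : Rabs (x - d / 2 - x) < d) by (rewrite Rabs_left; lra).
  specialize (Hf' (x - d / 2) ltac:(lra)). specialize (Hg' (x - d / 2) ltac:(lra)).
  specialize (H (x - d / 2) ltac:(lra)).
  apply Rabs_def2 in Hf'. apply Rabs_def2 in Hg'. unfold e in *. lra.
Qed.

Lemma RInt_pow_sub_mul_le (W F : R -> R) a x m e : a <= x ->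
  (forall t, continuous W t) -> (forall t, continuous F t) ->
  (forall t, a <= t <= x -> W t <= F t + e) ->
  RInt (fun s => INR (S m) * (x - s) ^ m * W s) a x <=
  RInt (fun s => INR (S m) * (x - s) ^ m * F s) a x + e * (x - a) ^ S m.
Proof.
  intros Hax HW HF H. rewrite <- RInt_pow_sub, <- (RInt_scal (V := R_CompleteNormedModule)),
    <- (RInt_plus (V := R_CompleteNormedModule)).
  - apply RInt_le; auto; try apply ex_RInt_of_continuous; auto 10 with rcont.
    intros t Ht. change (scal ?p ?q) with (p * q). change (plus ?p ?q) with (p + q).
    specialize (H t ltac:(lra)).
    assert (0 <= INR (S m) * (x - t) ^ m) by (apply Rmult_le_pos; [apply pos_INR | apply pow_le; lra]).
    nra.
  - apply ex_RInt_of_continuous; auto 10 with rcont.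
  - apply (ex_RInt_scal (V := R_CompleteNormedModule)), ex_RInt_of_continuous; auto 10 with rcont.
  - apply ex_RInt_of_continuous; auto 10 with rcont.
Qed.

Section PowerWeight.

Variables (L F : R -> R) (a x : R) (m : nat).
Hypotheses (Hax : a < x) (HF : forall t, continuous F t) (HFa : F a = 0)
  (HL : forall t, a <= t <= x -> is_upper_int L a t (F t)).

(* Otherwise gluing a better major function on [a,t] to U would beat the infimum over [a,x]. *)
Lemma major_le_upper_int U e : major_fun U L a x -> (forall t, continuous U t) ->
  U a = 0 -> U x <= F x + e -> forall t, a <= t <= x -> U t <= F t + e.
Proof.
  intros HU CU Ua Ux t Ht. apply Rnot_lt_le. intros Hlt.
  assert (He : 0 <= e) by (assert (H := proj1 (HL x ltac:(lra)) U HU); lra).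
  assert (Hat : a < t) by (destruct (Req_dec a t) as [<- |]; [rewrite Ua, HFa in Hlt |]; lra).
  set (e2 := (U t - F t - e) / 2).
  destruct (proj2 (HL t Ht) e2 ltac:(unfold e2; lra)) as [U' [HU' HU'2]].
  assert (M1 : major_fun (fun y => U' y + (U t - U' t)) L a t) by (apply major_add_const; auto).
  assert (M2 : major_fun U L t x) by (apply (major_restrict U L a x); auto; lra).
  assert (E : U' t + (U t - U' t) = U t) by ring.
  assert (HG := proj1 (HL x ltac:(lra)) _ (major_glue _ _ L a t x Ht E M1 M2)).
  rewrite (glue_l t _ _ a), (glue_r t _ _ x) in HG by (auto; lra). unfold e2 in *. lra.
Qed.

Lemma upper_int_pow_weight_le eps : 0 < eps -> exists V,
  major_fun V (fun t => L t * (x - t) ^ S m) a x /\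
  V x - V a <= RInt (fun t => INR (S m) * (x - t) ^ m * F t) a x + eps.
Proof.
  intros He. set (e := eps / ((x - a) ^ S m + 1)).
  assert (Hxa : 0 < (x - a) ^ S m) by (apply pow_lt; lra).
  assert (Hee : e * (x - a) ^ S m <= eps).
  { apply Rle_trans with (e * ((x - a) ^ S m + 1)); [| right; unfold e; field; lra].
    apply Rmult_le_compat_l; [left; apply Rdiv_lt_0_compat |]; lra. }
  destruct (proj2 (HL x ltac:(lra)) e ltac:(apply Rdiv_lt_0_compat; lra)) as [U0 [HU0 HU0x]].
  destruct (major_normalize U0 L a x ltac:(lra) HU0) as [U [HU [CU [Ua Ux]]]].
  assert (Cl := major_le_upper_int U e HU CU Ua ltac:(lra)).
  set (dpsi := fun t => - INR (S m) * (x - t) ^ m).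
  exists (fun t => (x - t) ^ S m * U t - RInt (fun s => U s * dpsi s) a t). split.
  - apply (major_ext _ (fun t => (x - t) ^ S m * L t)); [intros; ring |].
    apply (major_weighted U L _ dpsi a x (x + 1)); try lra; auto.
    + intros; apply is_derive_pow_sub.
    + intros; unfold dpsi; auto 10 with rcont.
    + intros; apply pow_le; lra.
  - rewrite RInt_point, Rminus_diag, pow_i, Ua by lia. change zero with 0.
    rewrite (RInt_ext _ (fun s => - (INR (S m) * (x - s) ^ m * U s)))
      by (intros; unfold dpsi; simpl; ring).
    rewrite (RInt_opp (V := R_CompleteNormedModule))
      by (apply ex_RInt_of_continuous; [lra | auto 10 with rcont]).
    change (opp ?y) with (- y).
    assert (H := RInt_pow_sub_mul_le U F a x m e ltac:(lra) CU HF Cl). lra.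
Qed.

Let reciprocal_transform (V : R -> R) (t : R) : R :=
  / (x - t) ^ S m * V t - RInt (fun s => V s * (INR (S m) * / (x - s) ^ S (S m))) a t.

Lemma continuous_reciprocal_integrand (V : R -> R) : (forall t, continuous V t) ->
  forall s, s < x -> continuous (fun s => V s * (INR (S m) * / (x - s) ^ S (S m))) s.
Proof.
  intros CV s Hs. apply continuous_Rmult, continuous_Rmult; auto 10 with rcont.
  apply continuous_inv_pow_sub; auto.
Qed.

Lemma continuous_reciprocal_transform (V : R -> R) : (forall t, continuous V t) ->
  forall t, t < x -> continuous (reciprocal_transform V) t.
Proof.
  intros CV t Ht. unfold reciprocal_transform. apply continuous_Rminus.
  - apply continuous_Rmult; auto. apply continuous_inv_pow_sub; auto.
  - apply (continuous_RInt_lt _ a x); try lra. apply continuous_reciprocal_integrand; auto.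
Qed.

(* Dividing the major function by the weight recovers a major function of L on [a,t']. *)
Lemma upper_int_le_reciprocal_weight (V : R -> R) : major_fun V (fun t => L t * (x - t) ^ S m) a x ->
  (forall t, continuous V t) -> V a = 0 -> forall t', a <= t' < x -> F t' <= reciprocal_transform V t'.
Proof.
  intros HV CV Va t' Ht'.
  assert (MR := major_restrict V _ a x a t' CV ltac:(lra) ltac:(lra) ltac:(lra) HV).
  assert (MT := major_weighted V _ (fun t => / (x - t) ^ S m)
    (fun t => INR (S m) * / (x - t) ^ S (S m)) a t' x ltac:(lra) ltac:(lra) CV
    (fun t Ht => is_derive_inv_pow_sub x m t Ht)
    ltac:(intros t Ht; apply continuous_Rmult, continuous_inv_pow_sub; auto 10 with rcont)
    ltac:(intros t Ht; left; apply Rinv_0_lt_compat, pow_lt; lra) MR).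
  apply (major_ext _ _ L) in MT.
  2:{ intros t Ht. field. apply pow_nonzero; lra. }
  assert (Hl := proj1 (HL t' ltac:(lra)) _ MT).
  unfold reciprocal_transform in *. rewrite RInt_point, Va in Hl. change zero with 0 in Hl. lra.
Qed.

Lemma reciprocal_weight_identity (V : R -> R) : (forall t, continuous V t) -> forall t', a <= t' < x ->
  V t' = (x - t') ^ S m * reciprocal_transform V t'
    + RInt (fun t => INR (S m) * (x - t) ^ m * reciprocal_transform V t) a t'.
Proof.
  intros CV t' Ht'.
  set (P := fun t => RInt (fun s => V s * (INR (S m) * / (x - s) ^ S (S m))) a t).
  assert (CP : forall t, t < x -> continuous P t)
    by (intros; apply (continuous_RInt_lt _ a x); try lra;
        apply continuous_reciprocal_integrand; auto).
  assert (Hi : is_RInt (fun t => - INR (S m) * (x - t) ^ m * P t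
      + (x - t) ^ S m * (V t * (INR (S m) * / (x - t) ^ S (S m)))) a t'
      (minus ((x - t') ^ S m * P t') ((x - a) ^ S m * P a))).
  { apply (is_RInt_derive (V := R_CompleteNormedModule) (fun t => (x - t) ^ S m * P t));
      intros t Ht; rewrite Rmin_left, Rmax_right in Ht by lra.
    - apply (is_derive_mult (K := R_AbsRing) (fun t => (x - t) ^ S m) P);
        [apply is_derive_pow_sub | | intros; unfold mult; simpl; ring].
      apply (is_derive_RInt (V := R_CompleteNormedModule)
        (fun s => V s * (INR (S m) * / (x - s) ^ S (S m))) P a t).
      + assert (Hr : 0 < x - t) by lra. exists (mkposreal _ Hr). intros z Hz.
        change (Rabs (z - t) < x - t) in Hz. apply Rabs_def2 in Hz.
        apply (RInt_correct (V := R_CompleteNormedModule)), (ex_RInt_of_continuous_lt _ x);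
          try lra; apply continuous_reciprocal_integrand; auto.
      + apply continuous_reciprocal_integrand; auto; lra.
    - apply continuous_Rplus; [apply continuous_Rmult; [auto 10 with rcont | apply CP; lra] |].
      apply continuous_Rmult; auto 10 with rcont. apply continuous_reciprocal_integrand; auto; lra. }
  apply (is_RInt_unique (V := R_CompleteNormedModule)) in Hi.
  rewrite (RInt_ext (V := R_CompleteNormedModule) _
    (fun t => - INR (S m) * (x - t) ^ m * P t
      + (x - t) ^ S m * (V t * (INR (S m) * / (x - t) ^ S (S m))))).
  2:{ intros t Ht. rewrite Rmin_left, Rmax_right in Ht by lra. unfold reciprocal_transform. fold (P t).
      change (INR (S m) * (x - t) ^ m * (/ (x - t) ^ S m * V t - P t) =
        - INR (S m) * (x - t) ^ m * P t
        + (x - t) ^ S m * (V t * (INR (S m) * / (x - t) ^ S (S m)))).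
      cbn [pow]. field. split; [apply pow_nonzero |]; lra. }
  rewrite Hi. unfold reciprocal_transform. fold (P t').
  replace (P a) with 0 by (unfold P; rewrite RInt_point; reflexivity).
  change (minus ?p ?q) with (p - q).
  field. apply pow_nonzero; lra.
Qed.

Lemma upper_int_pow_weight_ge V0 : major_fun V0 (fun t => L t * (x - t) ^ S m) a x ->
  RInt (fun t => INR (S m) * (x - t) ^ m * F t) a x <= V0 x - V0 a.
Proof.
  intros HV0. destruct (major_normalize V0 _ a x ltac:(lra) HV0) as [V [HV [CV [Va Vx]]]].
  set (J := fun t => (x - t) ^ S m * F t + RInt (fun s => INR (S m) * (x - s) ^ m * F s) a t).
  replace (RInt (fun t => INR (S m) * (x - t) ^ m * F t) a x) with (J x)
    by (unfold J; rewrite Rminus_diag, pow_i by lia; ring).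
  rewrite <- Vx. apply (continuous_le_left_end J V a x); auto.
  { apply continuous_Rplus; [auto 10 with rcont |].
    apply (continuous_RInt_lt _ a (x + 1)); [auto 10 with rcont | lra | lra]. }
  intros t' Ht'. rewrite (reciprocal_weight_identity V CV t' Ht').
  assert (Hge := upper_int_le_reciprocal_weight V HV CV Va).
  apply Rplus_le_compat.
  - apply Rmult_le_compat_l; [apply pow_le; lra | apply Hge; lra].
  - apply RInt_le; [lra | | |].
    + apply ex_RInt_of_continuous; [lra | auto 10 with rcont].
    + apply ex_RInt_of_continuous; [lra |]. intros.
      apply continuous_Rmult; [auto 10 with rcont | apply continuous_reciprocal_transform; auto; lra].
    + intros t Ht. apply Rmult_le_compat_l; [| apply Hge; lra].
      apply Rmult_le_pos; [apply pos_INR | apply pow_le; lra].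
Qed.

Lemma is_upper_int_pow_weight :
  is_upper_int (fun t => L t * (x - t) ^ S m) a x
    (RInt (fun t => INR (S m) * (x - t) ^ m * F t) a x).
Proof. split; [apply upper_int_pow_weight_ge | apply upper_int_pow_weight_le]. Qed.

End PowerWeight.

Lemma is_LaplaceInt_pow_weight L F a x m : a < x ->
  (forall t, continuous F t) -> F a = 0 ->
  (forall t, a <= t <= x -> is_LaplaceInt L a t (F t)) ->
  is_LaplaceInt (fun t => L t * (x - t) ^ S m) a x
    (RInt (fun t => INR (S m) * (x - t) ^ m * F t) a x).
Proof.
  intros Hax HF HFa HL. apply is_LaplaceInt_iff. split.
  - apply is_upper_int_pow_weight; auto.
    intros t Ht. apply is_LaplaceInt_iff, HL; auto.
  - assert (H := is_upper_int_pow_weight (fun t => - L t) (fun t => - F t) a x m Hax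
      ltac:(auto 10 with rcont) ltac:(cbv beta; rewrite HFa; ring)
      ltac:(intros t Ht; apply is_LaplaceInt_iff, HL; auto)).
    assert (E : RInt (fun t => INR (S m) * (x - t) ^ m * - F t) a x
      = - RInt (fun t => INR (S m) * (x - t) ^ m * F t) a x).
    { rewrite <- (RInt_opp (V := R_CompleteNormedModule))
        by (apply ex_RInt_of_continuous; [lra | auto 10 with rcont]).
      apply RInt_ext. intros; unfold opp; simpl; ring. }
    cbv beta in H. rewrite E in H. revert H. apply is_upper_int_ext. intros; ring.
Qed.

Lemma is_derive_clamp_interior (G G' : R -> R) a b t : deriv_on G G' a b -> a < t < b ->
  is_derive (fun y => G (clamp a b y)) t (G' t).
Proof.
  intros HD Ht. apply is_derive_Reals. intros eps He.
  destruct (HD t ltac:(lra) eps He) as [d [Hd Hd2]].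
  set (d' := Rmin d (Rmin (t - a) (b - t))).
  assert (Hd' : 0 < d') by (repeat apply Rmin_glb_lt; lra).
  assert (d' <= d) by apply Rmin_l.
  assert (d' <= t - a) by (eapply Rle_trans; [apply Rmin_r | apply Rmin_l]).
  assert (d' <= b - t) by (eapply Rle_trans; [apply Rmin_r | apply Rmin_r]).
  exists (mkposreal _ Hd'). intros h Hh Hh2. simpl in Hh2. apply Rabs_def2 in Hh2.
  rewrite !clamp_id by lra. replace h with (t + h - t) at 2 by ring.
  apply Hd2; [lra |]. replace (t + h - t) with h by ring.
  split; [apply Rabs_pos_lt; auto | apply Rabs_def1; lra].
Qed.

Lemma is_derive_Rplus (f g : R -> R) x df dg : is_derive f x df -> is_derive g x dg ->
  is_derive (fun y => f y + g y) x (df + dg).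
Proof. apply (is_derive_plus (K := R_AbsRing) (V := R_NormedModule)). Qed.

Lemma is_derive_Rmult (f g : R -> R) x df dg : is_derive f x df -> is_derive g x dg ->
  is_derive (fun y => f y * g y) x (df * g x + f x * dg).
Proof. intros; apply (is_derive_mult (K := R_AbsRing)); auto. intros; apply Rmult_comm. Qed.

Lemma is_derive_Rext (f g : R -> R) x l :
  (forall y, f y = g y) -> is_derive f x l -> is_derive g x l.
Proof. apply (is_derive_ext (K := R_AbsRing) (V := R_NormedModule)). Qed.

Section Taylor.

Variables (D : nat -> R -> R) (a b x : R) (m : nat).
Hypotheses (Hax : a < x) (Hxb : x <= b)
  (HD : forall k, (k <= m)%nat -> deriv_on (D k) (D (S k)) a b)
  (HC : forall k, (k <= S m)%nat -> cont_on (D k) a b).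

Let Dclamp (k : nat) (t : R) : R := D k (clamp a b t).

Let taylor_sum (j : nat) (t : R) : R :=
  sum_f_R0 (fun k => Dclamp k t * (x - t) ^ k / INR (fact k)) j.

Lemma continuous_Dc k : (k <= S m)%nat -> forall t, continuous (Dclamp k) t.
Proof. intros Hk t. apply continuous_clamp; auto; lra. Qed.

Lemma continuous_taylor_sum j : (j <= m)%nat -> forall t, continuous (taylor_sum j) t.
Proof.
  induction j as [| j IH]; intros Hj t; unfold taylor_sum; simpl.
  - unfold Rdiv. apply continuous_Rmult; [| apply continuous_const].
    apply continuous_Rmult; [apply continuous_Dc; lia | auto 10 with rcont].
  - apply continuous_Rplus; [apply IH; lia |]. unfold Rdiv.
    apply continuous_Rmult; [| apply continuous_const].
    apply continuous_Rmult; [apply continuous_Dc; lia | auto 10 with rcont].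
Qed.

(* The derivative telescopes: only the top-order term survives. *)
Lemma is_derive_taylor_sum j : (j <= m)%nat -> forall t, a < t < b ->
  is_derive (taylor_sum j) t (Dclamp (S j) t * (x - t) ^ j / INR (fact j)).
Proof.
  assert (HDc : forall k, (k <= m)%nat -> forall t, a < t < b ->
    is_derive (Dclamp k) t (Dclamp (S k) t)).
  { intros k Hk t Ht. unfold Dclamp. rewrite (clamp_id a b t) by lra.
    apply is_derive_clamp_interior; auto. }
  induction j as [| j IH]; intros Hj t Ht.
  - apply (is_derive_Rext (Dclamp 0)); [intros; unfold taylor_sum; simpl; field |].
    replace (Dclamp 1 t * (x - t) ^ 0 / INR (fact 0)) with (Dclamp 1 t) by (simpl; field).
    apply HDc; auto; lia.
  - apply (is_derive_Rext (fun t => taylor_sum j t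
      + Dclamp (S j) t * (/ INR (fact (S j)) * (x - t) ^ S j))).
    { intros; unfold taylor_sum; rewrite tech5; unfold Rdiv; ring. }
    replace (Dclamp (S (S j)) t * (x - t) ^ S j / INR (fact (S j)))
      with (Dclamp (S j) t * (x - t) ^ j / INR (fact j)
        + (Dclamp (S (S j)) t * (/ INR (fact (S j)) * (x - t) ^ S j)
           + Dclamp (S j) t * (/ INR (fact (S j)) * (- INR (S j) * (x - t) ^ j)))).
    2:{ rewrite fact_simpl, mult_INR.
        assert (INR (fact j) <> 0) by apply INR_fact_neq_0.
        assert (INR (S j) <> 0) by (apply not_0_INR; lia).
        set (z := INR (S j)). set (w := INR (fact j)). field. auto. }
    apply is_derive_Rplus; [apply IH; auto; lia |].
    apply (is_derive_Rmult (Dclamp (S j)) (fun t => / INR (fact (S j)) * (x - t) ^ S j));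
      [apply HDc; auto |].
    apply (is_derive_scal (fun t => (x - t) ^ S j)), is_derive_pow_sub.
Qed.

Lemma taylor_sum_at_x j : taylor_sum j x = Dclamp 0 x.
Proof.
  induction j as [| j IH]; unfold taylor_sum in *; [simpl; field |].
  rewrite tech5, IH, Rminus_diag, pow_i by lia. unfold Rdiv; ring.
Qed.

Let remainder (s : R) : R := Dclamp (S m) s * (x - s) ^ m.

Lemma continuous_remainder t : continuous remainder t.
Proof. apply continuous_Rmult; [apply continuous_Dc; lia | auto 10 with rcont]. Qed.

Lemma ex_RInt_remainder p q : ex_RInt remainder p q.
Proof.
  apply (ex_RInt_continuous (V := R_CompleteNormedModule)); intros; apply continuous_remainder.
Qed.

Lemma continuous_RInt_remainder t : continuous (fun y => RInt remainder x y) t.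
Proof.
  apply (continuous_RInt_1 (V := R_CompleteNormedModule) remainder x t). exists (mkposreal 1 Rlt_0_1).
  intros; apply (RInt_correct (V := R_CompleteNormedModule)), ex_RInt_remainder.
Qed.

(* Phi t = taylor_sum m t - (1/m!) int_x^t remainder is constant, by the telescoping derivative. *)
Lemma taylor_integral_remainder :
  D 0 x = sum_f_R0 (fun k => D k a / INR (fact k) * (x - a) ^ k) m
    + RInt (fun t => D (S m) t * (x - t) ^ m) a x / INR (fact m).
Proof.
  set (Phi := fun t => taylor_sum m t - / INR (fact m) * RInt remainder x t).
  assert (Hd : forall t, a < t < x -> is_derive Phi t 0).
  { intros t Ht. replace 0 with (Dclamp (S m) t * (x - t) ^ m / INR (fact m)
      - / INR (fact m) * remainder t) by (unfold remainder; field; apply INR_fact_neq_0).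
    apply (is_derive_minus (K := R_AbsRing) (V := R_NormedModule));
      [apply is_derive_taylor_sum; auto; lra |].
    apply is_derive_scal, (is_derive_RInt (V := R_CompleteNormedModule) _ _ x).
    - exists (mkposreal 1 Rlt_0_1). intros.
      apply (RInt_correct (V := R_CompleteNormedModule)), ex_RInt_remainder.
    - apply continuous_remainder. }
  destruct (MVT_gen Phi a x (fun _ => 0)) as [c [_ Hc]].
  - rewrite Rmin_left, Rmax_right by lra. auto.
  - intros t _. apply continuity_pt_filterlim. change (continuous Phi t). unfold Phi.
    apply continuous_Rminus; [apply continuous_taylor_sum; auto |].
    apply continuous_Rmult; [apply continuous_const | apply continuous_RInt_remainder].
  - rewrite Rmult_0_l in Hc. apply Rminus_diag_uniq in Hc. unfold Phi in Hc.
    rewrite taylor_sum_at_x, RInt_point in Hc. change zero with 0 in Hc.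
    rewrite <- (opp_RInt_swap (V := R_CompleteNormedModule)) in Hc by apply ex_RInt_remainder.
    change (opp ?y) with (- y) in Hc.
    replace (D 0 x) with (Dclamp 0 x) by (unfold Dclamp; rewrite clamp_id; auto; lra).
    replace (Dclamp 0 x) with (taylor_sum m a + / INR (fact m) * RInt remainder a x) by lra.
    unfold taylor_sum.
    rewrite (RInt_ext (fun t => D (S m) t * (x - t) ^ m) remainder).
    2:{ intros t Ht. rewrite Rmin_left, Rmax_right in Ht by lra.
        unfold remainder, Dclamp. rewrite clamp_id; auto; lra. }
    replace (sum_f_R0 (fun k => Dclamp k a * (x - a) ^ k / INR (fact k)) m)
      with (sum_f_R0 (fun k => D k a / INR (fact k) * (x - a) ^ k) m).
    + unfold Rdiv. ring.
    + apply sum_eq. intros i _. unfold Dclamp. rewrite clamp_id by lra. unfold Rdiv; ring.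
Qed.

End Taylor.

Lemma taylor_pow_weight_remainder D a b x m : a < x <= b ->
  (forall k, (k <= m)%nat -> deriv_on (D k) (D (S k)) a b) ->
  (forall k, (k <= S m)%nat -> cont_on (D k) a b) ->
  D 0%nat x = sum_f_R0 (fun k => D k a / INR (fact k) * (x - a) ^ k) (S m)
    + RInt (fun t => INR (S m) * (x - t) ^ m * (D (S m) t - D (S m) a)) a x / INR (fact (S m)).
Proof.
  intros Hx HD HC. rewrite (taylor_integral_remainder D a b x m) by (auto; lra).
  assert (Hi : ex_RInt (fun t => D (S m) t * (x - t) ^ m) a x).
  { apply (ex_RInt_ext (fun t => D (S m) (clamp a b t) * (x - t) ^ m)).
    - intros t Ht. rewrite Rmin_left, Rmax_right in Ht by lra. rewrite clamp_id; auto; lra.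
    - apply ex_RInt_of_continuous; [lra | intros].
      apply continuous_Rmult; [apply continuous_clamp | auto 10 with rcont]; auto; lra. }
  rewrite (RInt_Rext (fun t => INR (S m) * (x - t) ^ m * (D (S m) t - D (S m) a))
    (fun t => minus (scal (INR (S m)) (D (S m) t * (x - t) ^ m))
                    (scal (D (S m) a) (INR (S m) * (x - t) ^ m))))
    by (intros; change (minus ?p ?q) with (p - q); change (scal ?p ?q) with (p * q); ring).
  assert (Hp : ex_RInt (fun t => INR (S m) * (x - t) ^ m) a x)
    by (apply ex_RInt_of_continuous; [lra | auto 10 with rcont]).
  rewrite (RInt_minus (V := R_CompleteNormedModule))
    by (apply (ex_RInt_scal (V := R_CompleteNormedModule)); auto).
  rewrite !(RInt_scal (V := R_CompleteNormedModule)) by auto.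
  change (minus ?p ?q) with (p - q). change (scal ?p ?q) with (p * q).
  rewrite RInt_pow_sub.
  rewrite tech5, fact_simpl, mult_INR.
  assert (INR (fact m) <> 0) by apply INR_fact_neq_0.
  assert (INR (S m) <> 0) by (apply not_0_INR; lia).
  set (z := INR (S m)). set (w := INR (fact m)). field. auto.
Qed.

Lemma RInt_pow_sub_mul_abs_le (F : R -> R) a x m A : a <= x -> (forall t, continuous F t) ->
  (forall t, a <= t <= x -> Rabs (F t) <= A) ->
  Rabs (RInt (fun t => INR (S m) * (x - t) ^ m * F t) a x) <= (x - a) ^ S m * A.
Proof.
  intros Hax HF HA.
  rewrite <- RInt_pow_sub, Rmult_comm, <- (RInt_scal (V := R_CompleteNormedModule))
    by (apply ex_RInt_of_continuous; [lra | auto 10 with rcont]).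
  apply RInt_abs_le; [lra | apply ex_RInt_of_continuous; [lra | auto 10 with rcont] | |].
  - apply (ex_RInt_scal (V := R_CompleteNormedModule)), ex_RInt_of_continuous;
      [lra | auto 10 with rcont].
  - intros t Ht. change (scal ?p ?q) with (p * q). rewrite Rabs_mult.
    specialize (HA t ltac:(lra)).
    assert (0 <= INR (S m) * (x - t) ^ m)
      by (apply Rmult_le_pos; [apply pos_INR | apply pow_le; lra]).
    rewrite Rabs_right by lra. nra.
Qed.

Lemma sum_taylor_at_center (D : nat -> R -> R) a n :
  sum_f_R0 (fun k => D k a / INR (fact k) * (a - a) ^ k) n = D 0%nat a.
Proof.
  induction n as [| n IH]; [simpl; field |].
  rewrite tech5, IH, Rminus_diag, pow_i by lia. ring.
Qed.

Lemma laplace_taylor_at n a b (f : R -> R) (D : nat -> R -> R) (L : R -> R) x :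
  (forall x, a <= x <= b -> D 0%nat x = f x) ->
  (forall k, (k < n)%nat -> deriv_on (D k) (D (S k)) a b) ->
  (forall k, (k <= n)%nat -> cont_on (D k) a b) ->
  (forall x, a <= x <= b -> is_LaplaceInt L a x (D n x - D n a)) ->
  a <= x <= b ->
  exists I, is_LaplaceInt (fun t => L t * (x - t) ^ n) a x I /\
    f x = sum_f_R0 (fun k => D k a / INR (fact k) * (x - a) ^ k) n + I / INR (fact n) /\
    (forall A, (forall t, a <= t <= x -> Rabs (D n t - D n a) <= A) -> Rabs I <= (x - a) ^ n * A).
Proof.
  intros Hf HD HC HL Hx. rewrite <- Hf by lra.
  destruct (Req_dec x a) as [-> | Hxa].
  { exists 0. split; [apply is_LaplaceInt_point |]. split.
    - rewrite sum_taylor_at_center. unfold Rdiv; ring.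
    - intros A HA. specialize (HA a ltac:(lra)). rewrite Rminus_diag, Rabs_R0 in HA.
      rewrite Rabs_R0. apply Rmult_le_pos; [apply pow_le |]; lra. }
  destruct n as [| m].
  { exists (D 0%nat x - D 0%nat a). split; [| split].
    - apply (is_LaplaceInt_ext L); [intros; simpl; ring | apply HL; lra].
    - simpl. field.
    - intros A HA. simpl. rewrite Rmult_1_l. apply HA; lra. }
  set (F := fun t => D (S m) (clamp a b t) - D (S m) a).
  assert (CF : forall t, continuous F t)
    by (intros; apply continuous_Rminus, continuous_const; apply continuous_clamp; auto; lra).
  assert (EF : forall t, a <= t <= b -> F t = D (S m) t - D (S m) a)
    by (intros; unfold F; rewrite clamp_id; lra).
  assert (E : RInt (fun t => INR (S m) * (x - t) ^ m * (D (S m) t - D (S m) a)) a x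
    = RInt (fun t => INR (S m) * (x - t) ^ m * F t) a x).
  { apply RInt_Rext. intros t Ht. rewrite Rmin_left, Rmax_right in Ht by lra.
    rewrite EF; lra. }
  exists (RInt (fun t => INR (S m) * (x - t) ^ m * F t) a x). split; [| split].
  - apply is_LaplaceInt_pow_weight; [lra | auto | rewrite EF; lra |].
    intros t Ht. rewrite EF by lra. apply HL; lra.
  - rewrite <- E. apply (taylor_pow_weight_remainder D a b); auto; [lra |].
    intros k Hk. apply HD. lia.
  - intros A HA. apply RInt_pow_sub_mul_abs_le; auto; [lra |].
    intros t Ht. rewrite EF by lra. apply HA; lra.
Qed.

Lemma Alex_norm_ge h a b t I : a <= t <= b -> is_LaplaceInt h a t I ->
  Rbar_le (Finite (Rabs I)) (Alex_norm h a b).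
Proof.
  intros Ht HI. unfold Alex_norm.
  apply (Lub_Rbar_correct (fun y => exists x I, a <= x <= b /\ is_LaplaceInt h a x I /\ y = Rabs I)).
  exists t, I. auto.
Qed.

Lemma Rbar_mult_pos_p_infty c : 0 < c -> Rbar_mult (Finite c) p_infty = p_infty.
Proof.
  intros Hc. unfold Rbar_mult, Rbar_mult'. destruct Rle_dec; [| lra].
  destruct Rle_lt_or_eq_dec; [reflexivity | lra].
Qed.

Lemma Rabs_div_fact_le n a b x I A : a <= x <= b -> 0 <= A ->
  Rabs I <= (x - a) ^ n * A -> Rabs (I / INR (fact n)) <= (b - a) ^ n / INR (fact n) * A.
Proof.
  intros Hx HA HI. assert (Hf : 0 < / INR (fact n)) by apply Rinv_0_lt_compat, INR_fact_lt_0.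
  unfold Rdiv. rewrite Rabs_mult, (Rabs_right (/ _)) by lra.
  replace ((b - a) ^ n * / INR (fact n) * A) with ((b - a) ^ n * A * / INR (fact n)) by ring.
  apply Rmult_le_compat_r; [lra |]. eapply Rle_trans; [apply HI |].
  apply Rmult_le_compat_r, pow_incr; lra.
Qed.

Theorem theorem9p1 (n : nat) (a b : R) (f : R -> R) (D : nat -> R -> R)
  (L : R -> R) :
  a < b ->
  (forall x, a <= x <= b -> D 0%nat x = f x) ->
  (forall k, (k < n)%nat -> deriv_on (D k) (D (S k)) a b) ->
  (forall k, (k <= n)%nat -> cont_on (D k) a b) ->
  (* L is LD_{n+1} f wherever the latter exists, which is a.e. on [a,b] *)
  (exists N, null_set N /\
     forall x, a <= x <= b -> ~ N x -> is_LD D n a b x (L x)) ->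
  (exists I, is_LaplaceInt L a b I) ->
  (forall x, a <= x <= b -> is_LaplaceInt L a x (D n x - D n a)) ->
  (forall x, a <= x <= b -> exists I,
      is_LaplaceInt (fun t => L t * (x - t) ^ n) a x I /\
      f x = sum_f_R0 (fun k => D k a / INR (fact k) * (x - a) ^ k) n
            + I / INR (fact n)) /\
  Rbar_le
    (Lub_Rbar (fun y => exists x I, a <= x <= b /\
        is_LaplaceInt (fun t => L t * (x - t) ^ n) a x I /\
        y = Rabs (I / INR (fact n))))
    (Rbar_mult (Finite ((b - a) ^ n / INR (fact n))) (Alex_norm L a b)).
Proof.
  (* Neither the a.e. existence of LD_{n+1} f nor the integrability of L over [a,b]
     is needed beyond the integral identity for f^(n). *)
  intros Hab Hf HD HC _ _ HL.
  assert (Hat := fun x => laplace_taylor_at n a b f D L x Hf HD HC HL).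
  split; [intros x Hx; destruct (Hat x Hx) as [I [? [? _]]]; eauto |].
  assert (Hnorm : forall t, a <= t <= b ->
      Rbar_le (Finite (Rabs (D n t - D n a))) (Alex_norm L a b))
    by (intros; apply Alex_norm_ge with t; auto).
  assert (Hc : 0 < (b - a) ^ n / INR (fact n))
    by (apply Rdiv_lt_0_compat; [apply pow_lt; lra | apply INR_fact_lt_0]).
  destruct (Alex_norm L a b) as [A | |].
  - apply Lub_Rbar_correct. intros y [x [I' [Hx [HI' ->]]]].
    destruct (Hat x Hx) as [I [HI [_ Hbound]]].
    rewrite (is_LaplaceInt_unique _ _ _ _ _ HI' HI).
    assert (HA : 0 <= A) by (eapply Rle_trans; [apply Rabs_pos | apply (Hnorm a); lra]).
    apply (Rabs_div_fact_le n a b x); auto.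
    apply Hbound. intros t Ht. apply (Hnorm t); lra.
  - rewrite Rbar_mult_pos_p_infty by auto. destruct Lub_Rbar; simpl; auto.
  - destruct (Hnorm a ltac:(lra)).
Qed.
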